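(* Let $\varphi:\mathbb{R}\times[0,\infty)\to(0,\infty)$ be a $C^2$ function such that $$\inf_{(y,z)\in\mathbb{R}\times[0,\infty)}\frac{\partial\varphi}{\partial z}(y,z)\ge0,\qquad \sup_{(y,z)\in\mathbb{R}\times[0,\infty)}\frac{\partial\varphi}{\partial z}(y,z)<\infty,\qquad \frac{\partial\varphi}{\partial z}(0,1)<1,\qquad \varphi(0,1)=1,$$ and such that the equation $\alpha=\varphi\bigl(0,1/\varphi(0,1/\alpha)\bigr)$, $\alpha>0$, has the unique solution $\alpha=1$. Then there exists a unique solution $g$ of the differential equation $$g'(y)=\varphi\left(y,\frac{y}{g(y)}\right),\qquad g(0)=0.$$ The solution $g$ is $C^2$, satisfies, as $y\to0$, $$g(y)=g'(0)y+g''(0)\tfrac{y^2}{2}+O(y^3),\quad g'(y)=g'(0)+g''(0)y+O(y^2),\quad g''(y)=g''(0)+O(y),$$ and satisfies $g(y)/y>0$ for all $y\neq0$. *)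

From Stdlib Require Import Reals.
From Coquelicot Require Import Coquelicot.
Open Scope R_scope.

Definition pd_y (f : R -> R -> R) (y z : R) : R := Derive (fun t => f t z) y.
Definition pd_z (f : R -> R -> R) (y z : R) : R := Derive (fun t => f y t) z.

Definition has_partials (f : R -> R -> R) : Prop :=
  forall y z, ex_derive (fun t => f t z) y /\ ex_derive (fun t => f y t) z.

Definition C2_2d (f : R -> R -> R) : Prop :=
  has_partials f /\ has_partials (pd_y f) /\ has_partials (pd_z f) /\
  forall y z,
    continuity_2d_pt f y z /\
    continuity_2d_pt (pd_y f) y z /\ continuity_2d_pt (pd_z f) y z /\
    continuity_2d_pt (pd_y (pd_y f)) y z /\ continuity_2d_pt (pd_z (pd_y f)) y z /\
    continuity_2d_pt (pd_y (pd_z f)) y z /\ continuity_2d_pt (pd_z (pd_z f)) y z.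

Definition C2_1d (g : R -> R) : Prop :=
  forall y, ex_derive g y /\ ex_derive (Derive g) y /\
            continuous (Derive_n g 2) y.

(* Solution of  g'(y) = phi(y, y/g(y)),  g(0) = 0.
   For y <> 0 the argument y/g(y) must lie in the domain [0,oo) of phi
   (in particular g(y) <> 0).  At y = 0 the quotient y/g(y) is read as its
   limit 1/g'(0), so the equation at 0 is  g'(0) = phi(0, 1/g'(0)). *)
Definition is_solution (phi : R -> R -> R) (g : R -> R) : Prop :=
  (forall y, ex_derive g y) /\
  g 0 = 0 /\
  (forall y, y <> 0 ->
     g y <> 0 /\ 0 <= y / g y /\ Derive g y = phi y (y / g y)) /\
  Derive g 0 <> 0 /\ Derive g 0 = phi 0 (/ Derive g 0).

Definition bigO0 (f : R -> R) (k : nat) : Prop :=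
  exists C delta, 0 < delta /\
    forall y, Rabs y < delta -> Rabs (f y) <= C * Rabs y ^ k.

From Stdlib Require Import Reals Lra Lia Psatz FunctionalExtensionality ClassicalEpsilon.
From Coquelicot Require Import Coquelicot.
Open Scope R_scope.

(* Writing g(y) = y G(y), the problem g' = phi(y, y/g), g(0) = 0 becomes the fixed-point
   equation G(y) = mean of t |-> phi(t, 1/G(t)) over [0, y], and the hypothesis on the equation
   a = phi(0, 1/phi(0, 1/a)) forces G(0) = g'(0) = 1 for every solution.
   On a strip |y| <= Y the integrand is truncated so that it is globally Lipschitz in G.  Near
   y = 0 the averaged map is a contraction because d_z phi(0,1) < 1; away from 0 the weight
   exp(K|y|) absorbs the Lipschitz constant.  Hence Picard iteration converges to the only
   solution on the strip, and these solutions glue to a global G.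
   The same contraction bootstraps G - 1 = O(y) into G - 1 - G'(0) y = O(y^2), so G is C^1;
   then g' = phi(y, 1/G) is C^1 with g''(y) - g''(0) = O(y), and integrating this estimate twice
   gives the expansions of g' and g. *)

Lemma continuous_R_eps_delta (f : R -> R) x :
  continuous f x <-> forall eps : posreal, exists d : posreal,
    forall y, Rabs (y - x) < d -> Rabs (f y - f x) < eps.
Proof.
  split.
  - intros H eps. apply continuity_pt_filterlim in H.
    destruct (proj1 (continuity_pt_locally f x) H eps) as [d Hd].
    exists d. intros y Hy. now apply Hd.
  - intros H. apply continuity_pt_filterlim, continuity_pt_locally. intros eps.
    destruct (H eps) as [d Hd]. exists d. intros y Hy. now apply Hd.
Qed.

Lemma continuous_comp_2d (f : R -> R -> R) (a b : R -> R) x :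
  continuity_2d_pt f (a x) (b x) -> continuous a x -> continuous b x ->
  continuous (fun t => f (a t) (b t)) x.
Proof.
  intros Hf Ha Hb. apply continuous_comp_2; auto. now apply continuity_2d_pt_filterlim.
Qed.

Lemma locally_neq (x y : R) : y <> x -> locally y (fun z => z <> x).
Proof.
  intros Hy. assert (H : 0 < Rabs (y - x)) by (apply Rabs_pos_lt; lra).
  exists (mkposreal _ H). intros z Hz ->. change (Rabs (x - y) < Rabs (y - x)) in Hz.
  rewrite Rabs_minus_sym in Hz. lra.
Qed.

Lemma RInt_Rmult (f : R -> R) a b c :
  ex_RInt f a b -> RInt (fun x => c * f x) a b = c * RInt f a b.
Proof. exact (RInt_scal (V := R_CompleteNormedModule) f a b c). Qed.

Lemma RInt_Rminus (f g : R -> R) a b : ex_RInt f a b -> ex_RInt g a b ->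
  RInt (fun x => f x - g x) a b = RInt f a b - RInt g a b.
Proof. exact (RInt_minus (V := R_CompleteNormedModule) f g a b). Qed.

Lemma RInt_Rconst a b c : RInt (fun _ => c) a b = (b - a) * c.
Proof. exact (RInt_const (V := R_CompleteNormedModule) a b c). Qed.

Lemma ex_RInt_R (f : R -> R) a b : (forall t, continuous f t) -> ex_RInt f a b.
Proof. intros Hf. apply (ex_RInt_continuous (V := R_CompleteNormedModule)). auto. Qed.

Lemma continuous_Rmult_r (y s : R) : continuous (fun s => s * y) s.
Proof.
  apply (continuous_mult (fun s => s) (fun _ => y)); [apply continuous_id | apply continuous_const].
Qed.

Lemma continuous_scale (f : R -> R) (y s : R) :
  continuous f (s * y) -> continuous (fun s => f (s * y)) s.
Proof. apply (continuous_comp (fun s => s * y) f), continuous_Rmult_r. Qed.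

Lemma Rabs_scale_le s y : 0 <= s <= 1 -> Rabs (s * y) <= Rabs y.
Proof. intros Hs. rewrite Rabs_mult, (Rabs_right s) by lra. pose proof (Rabs_pos y). nra. Qed.

Lemma exp_le_compat x y : x <= y -> exp x <= exp y.
Proof. intros [H | ->]; [now apply Rlt_le, exp_increasing | apply Rle_refl]. Qed.

Lemma continuous_exp_scal (b t : R) : continuous (fun s => exp (b * s)) t.
Proof.
  apply (continuous_comp (fun s => b * s) exp).
  - apply (continuous_mult (fun _ => b) (fun s => s)); [apply continuous_const | apply continuous_id].
  - apply continuity_pt_filterlim, derivable_continuous_pt, derivable_pt_exp.
Qed.

Lemma RInt_exp_scal_le b : 0 < b -> RInt (fun s => exp (b * s)) 0 1 <= exp b / b.
Proof.
  intros Hb.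
  assert (H : is_RInt (fun s => exp (b * s)) 0 1 (minus (exp (b * 1) / b) (exp (b * 0) / b))).
  { apply (is_RInt_derive (V := R_CompleteNormedModule) (fun s => exp (b * s) / b)).
    - intros s _. auto_derive; [easy | field; lra].
    - intros s _. apply continuous_exp_scal. }
  rewrite (is_RInt_unique _ _ _ _ H). unfold minus, plus, opp; simpl.
  rewrite Rmult_1_r, Rmult_0_r, exp_0.
  assert (0 < / b) by (apply Rinv_0_lt_compat; lra). unfold Rdiv. nra.
Qed.

Definition clamp (lo hi x : R) : R := Rmax lo (Rmin hi x).

Lemma clamp_bounds lo hi x : lo <= hi -> lo <= clamp lo hi x <= hi.
Proof. intros H. unfold clamp, Rmax, Rmin. repeat destruct Rle_dec; lra. Qed.

Lemma clamp_id lo hi x : lo <= x <= hi -> clamp lo hi x = x.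
Proof. intros H. unfold clamp, Rmax, Rmin. repeat destruct Rle_dec; lra. Qed.

Lemma clamp_lipschitz lo hi a b : lo <= hi -> Rabs (clamp lo hi a - clamp lo hi b) <= Rabs (a - b).
Proof.
  intros H. unfold clamp, Rmax, Rmin.
  destruct (Rle_or_lt 0 (a - b));
    [rewrite (Rabs_right (a - b)) by lra | rewrite (Rabs_left (a - b)) by lra];
    repeat destruct Rle_dec; apply Rabs_le_between; lra.
Qed.

Lemma continuous_clamp lo hi x : lo <= hi -> continuous (clamp lo hi) x.
Proof.
  intros H. apply continuous_R_eps_delta. intros eps. exists eps. intros y Hy.
  eapply Rle_lt_trans; [apply clamp_lipschitz, H | exact Hy].
Qed.

Lemma Rinv_near_1 x e : 0 <= e <= 1/2 -> Rabs (x - 1) <= e -> Rabs (/ x - 1) <= 2 * e /\ 1/2 <= x.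
Proof.
  intros He Hx. apply Rabs_le_between in Hx. split; [| lra].
  replace (/ x - 1) with ((1 - x) / x) by (field; lra).
  unfold Rdiv. rewrite Rabs_mult, Rabs_inv, (Rabs_right x) by lra.
  apply Rmult_le_reg_r with x; [lra |]. rewrite Rmult_assoc, Rinv_l by lra.
  assert (Rabs (1 - x) <= e) by (apply Rabs_le_between; lra). nra.
Qed.

Lemma Rinv_lipschitz a b m : 0 < m -> m <= a -> m <= b -> Rabs (/ a - / b) <= Rabs (a - b) / (m * m).
Proof.
  intros Hm Ha Hb. replace (/ a - / b) with ((b - a) / (a * b)) by (field; lra).
  unfold Rdiv. rewrite Rabs_mult, Rabs_inv, (Rabs_right (a * b)), Rabs_minus_sym by nra.
  apply Rmult_le_compat_l; [apply Rabs_pos |]. apply Rinv_le_contravar; nra.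
Qed.

Definition slope_at_0 (h : R -> R) (y : R) : R := if Req_EM_T y 0 then Derive h 0 else h y / y.

Lemma slope_at_0_0 (h : R -> R) : slope_at_0 h 0 = Derive h 0.
Proof. unfold slope_at_0. destruct (Req_EM_T 0 0); [reflexivity | lra]. Qed.

Lemma slope_at_0_neq (h : R -> R) y : y <> 0 -> slope_at_0 h y = h y / y.
Proof. intros Hy. unfold slope_at_0. now destruct (Req_EM_T y 0). Qed.

Lemma continuous_slope_at_0 (h : R -> R) t :
  (forall y, ex_derive h y) -> h 0 = 0 -> continuous (slope_at_0 h) t.
Proof.
  intros Hd H0. destruct (Req_EM_T t 0) as [-> | Ht].
  - apply continuous_R_eps_delta. intros eps.
    pose proof (proj1 (is_derive_Reals h 0 (Derive h 0)) (Derive_correct _ _ (Hd 0))) as Hl.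
    destruct (Hl eps (cond_pos eps)) as [delta Hdelta]. exists delta. intros x Hx.
    rewrite slope_at_0_0. destruct (Req_EM_T x 0) as [-> | Hx0].
    + rewrite slope_at_0_0, Rminus_diag, Rabs_R0. apply cond_pos.
    + rewrite slope_at_0_neq by exact Hx0. rewrite Rminus_0_r in Hx.
      specialize (Hdelta x Hx0 Hx). now rewrite Rplus_0_l, H0, Rminus_0_r in Hdelta.
  - apply continuous_ext_loc with (g := fun z => h z * / z).
    + apply (filter_imp (fun z => z <> 0)); [| now apply locally_neq].
      intros z Hz. now rewrite slope_at_0_neq.
    + apply (continuous_mult h (fun z => / z)).
      * apply (ex_derive_continuous (K := R_AbsRing) (V := R_NormedModule)), Hd.
      * apply continuous_Rinv_comp; [apply continuous_id | exact Ht].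
Qed.

Lemma continuous_0_nonneg (v : R -> R) : continuous v 0 -> (forall y, y <> 0 -> 0 < v y) -> 0 <= v 0.
Proof.
  intros Hv Hp. destruct (Rle_or_lt 0 (v 0)) as [| Hlt]; [assumption | exfalso].
  destruct (proj1 (continuous_R_eps_delta v 0) Hv (mkposreal (- v 0) ltac:(lra))) as [d Hd].
  pose proof (cond_pos d).
  specialize (Hd (d / 2) ltac:(rewrite Rminus_0_r, Rabs_right; lra)). simpl in Hd.
  specialize (Hp (d / 2) ltac:(lra)). apply Rabs_lt_between in Hd. lra.
Qed.

(** * Averages *)

(* The mean of [f] over [[0, y]]; this form also makes sense at [y = 0]. *)
Definition average (f : R -> R) (y : R) : R := RInt (fun s => f (s * y)) 0 1.

Lemma average_0 (f : R -> R) : average f 0 = f 0.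
Proof.
  unfold average. rewrite (RInt_ext _ (fun _ => f 0)), RInt_Rconst; [ring|].
  intros s _. now rewrite Rmult_0_r.
Qed.

Lemma average_ext (f g : R -> R) y :
  (forall s, 0 <= s <= 1 -> f (s * y) = g (s * y)) -> average f y = average g y.
Proof.
  intros H. apply RInt_ext. intros s Hs.
  rewrite Rmin_left, Rmax_right in Hs by lra. apply H. lra.
Qed.

Lemma average_const c y : average (fun _ => c) y = c.
Proof. unfold average. rewrite RInt_Rconst. ring. Qed.

Section Average.

Variable f : R -> R.
Hypothesis Hf : forall t, continuous f t.

Lemma ex_RInt_average y : ex_RInt (fun s => f (s * y)) 0 1.
Proof. apply ex_RInt_R. intros s. apply continuous_scale, Hf. Qed.

Lemma mult_average y : y * average f y = RInt f 0 y.
Proof.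
  unfold average. rewrite <- RInt_Rmult by apply ex_RInt_average.
  rewrite (RInt_ext _ (fun s => scal y (f (y * s + 0)))).
  - rewrite (RInt_comp_lin (V := R_CompleteNormedModule)). f_equal; ring.
    now apply ex_RInt_R.
  - intros s _. unfold scal; simpl. unfold mult; simpl. do 2 f_equal. ring.
Qed.

Lemma average_minus (g : R -> R) y : (forall t, continuous g t) ->
  average (fun t => f t - g t) y = average f y - average g y.
Proof.
  intros Hg. apply RInt_Rminus; [apply ex_RInt_average|].
  apply ex_RInt_R. intros s. apply continuous_scale, Hg.
Qed.

Lemma average_ge a y : (forall s, 0 <= s <= 1 -> a <= f (s * y)) -> a <= average f y.
Proof.
  intros H. rewrite <- (average_const a y) at 1.
  apply RInt_le; [lra | apply ex_RInt_const | apply ex_RInt_average |].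
  intros s Hs. apply H. lra.
Qed.

Lemma average_le a y : (forall s, 0 <= s <= 1 -> f (s * y) <= a) -> average f y <= a.
Proof.
  intros H. rewrite <- (average_const a y).
  apply RInt_le; [lra | apply ex_RInt_average | apply ex_RInt_const |].
  intros s Hs. apply H. lra.
Qed.

Lemma abs_average_le c y :
  (forall s, 0 <= s <= 1 -> Rabs (f (s * y)) <= c) -> Rabs (average f y) <= c.
Proof.
  intros H. apply Rabs_le_between. split.
  - apply average_ge. intros s Hs. pose proof (proj1 (Rabs_le_between _ _) (H s Hs)). lra.
  - apply average_le. intros s Hs. pose proof (proj1 (Rabs_le_between _ _) (H s Hs)). lra.
Qed.

Lemma abs_average_le_RInt (h : R -> R) y : (forall t, continuous h t) ->
  (forall s, 0 <= s <= 1 -> Rabs (f (s * y)) <= h s) -> Rabs (average f y) <= RInt h 0 1.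
Proof.
  intros Hh H. eapply Rle_trans; [apply abs_RInt_le; [lra | apply ex_RInt_average] |].
  apply RInt_le; [lra | | now apply ex_RInt_R |].
  - apply ex_RInt_R. intros s. apply (continuous_comp (fun s => f (s * y)) Rabs).
    + apply continuous_scale, Hf.
    + apply continuous_Rabs.
  - intros s Hs. apply H. lra.
Qed.

End Average.

Lemma continuous_average_0 (f : R -> R) :
  (forall t, continuous f t) -> continuous (average f) 0.
Proof.
  intros Hf. apply continuous_R_eps_delta. intros eps.
  destruct (proj1 (continuous_R_eps_delta f 0) (Hf 0) (pos_div_2 eps)) as [d Hd].
  exists d. intros y Hy. rewrite average_0.
  rewrite <- (average_const (f 0) y), <- average_minus
    by (exact Hf || intros; apply continuous_const).
  apply Rle_lt_trans with (pos_div_2 eps); [| simpl; destruct eps; simpl; lra].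
  apply abs_average_le.
  { intros t. apply (continuous_minus f (fun _ => f 0)); [apply Hf | apply continuous_const]. }
  intros s Hs. left. apply Hd.
  eapply Rle_lt_trans; [|exact Hy]. rewrite !Rminus_0_r. now apply Rabs_scale_le.
Qed.

Lemma continuous_average (f : R -> R) y :
  (forall t, continuous f t) -> continuous (average f) y.
Proof.
  intros Hf. destruct (Req_dec y 0) as [-> | Hy]; [now apply continuous_average_0 |].
  apply continuous_ext_loc with (g := fun z => RInt f 0 z / z).
  - apply (filter_imp (fun z => z <> 0)); [| now apply locally_neq].
    intros z Hz. change (RInt f 0 z / z = average f z :> R).
    rewrite <- mult_average by exact Hf. now field.
  - apply (ex_derive_continuous (K := R_AbsRing) (V := R_NormedModule)).
    apply ex_derive_div; [| apply ex_derive_id | exact Hy].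
    exists (f y). apply is_derive_RInt with (a := 0); [| apply Hf].
    apply filter_forall. intros z.
    apply (RInt_correct (V := R_CompleteNormedModule)), ex_RInt_R, Hf.
Qed.

Lemma average_linear c y : average (fun t => c * t) y = c * y / 2.
Proof.
  unfold average.
  assert (H : is_RInt (fun s => c * (s * y)) 0 1 (minus (c * y * 1 ^ 2 / 2) (c * y * 0 ^ 2 / 2))).
  { apply (is_RInt_derive (V := R_CompleteNormedModule) (fun s => c * y * s ^ 2 / 2)).
    - intros s _. auto_derive; [easy | field].
    - intros s _. apply (continuous_mult (fun _ => c) (fun s => s * y)).
      + apply continuous_const.
      + apply continuous_Rmult_r. }
  rewrite (is_RInt_unique _ _ _ _ H). unfold minus, plus, opp; simpl. field.
Qed.

(** * Geometric convergence *)

Lemma le_of_geometric_slack (x a C q : R) :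
  0 <= q < 1 -> (forall n, x <= a + C * q ^ n) -> x <= a.
Proof.
  intros Hq H.
  assert (Hq' : Rabs q < 1) by (rewrite Rabs_right; lra).
  pose proof (is_lim_seq_scal_l _ C 0 (is_lim_seq_geom q Hq')) as Hg. simpl in Hg.
  pose proof (is_lim_seq_plus' _ _ a _ (is_lim_seq_const a) Hg) as Hlim.
  rewrite Rmult_0_r, Rplus_0_r in Hlim.
  exact (is_lim_seq_le (fun _ => x) _ x a H (is_lim_seq_const x) Hlim).
Qed.

Lemma eq_of_geometric_bound (x y C q : R) :
  0 <= q < 1 -> (forall n, Rabs (x - y) <= C * q ^ n) -> x = y.
Proof.
  intros Hq H. apply Rminus_diag_uniq, Rabs_eq_0, Rle_antisym; [| apply Rabs_pos].
  apply (le_of_geometric_slack _ 0 C q Hq). intros n. rewrite Rplus_0_l. apply H.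
Qed.

Lemma geometric_increments_bound (u : nat -> R) (q W : R) :
  0 <= q < 1 -> 0 <= W -> (forall n, Rabs (u (S n) - u n) <= q ^ n * W) ->
  forall n m, (n <= m)%nat -> Rabs (u m - u n) <= q ^ n * W / (1 - q).
Proof.
  intros Hq HW Hs n m Hnm. replace m with (n + (m - n))%nat by lia.
  assert (Htel : forall k, Rabs (u (n + k)%nat - u n) <= (q ^ n - q ^ (n + k)) / (1 - q) * W).
  { induction k as [|k IH].
    - rewrite Nat.add_0_r, Rminus_diag, Rabs_R0, Rminus_diag. unfold Rdiv. lra.
    - replace (n + S k)%nat with (S (n + k)) by lia.
      replace (u (S (n + k)) - u n) with ((u (S (n + k)) - u (n + k)%nat) + (u (n + k)%nat - u n)) by ring.
      eapply Rle_trans; [apply Rabs_triang |].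
      specialize (Hs (n + k)%nat).
      replace ((q ^ n - q ^ S (n + k)) / (1 - q) * W)
        with (q ^ (n + k) * W + (q ^ n - q ^ (n + k)) / (1 - q) * W) by (simpl; field; lra).
      lra. }
  eapply Rle_trans; [apply Htel |].
  assert (0 <= q ^ (n + (m - n)) / (1 - q) * W).
  { apply Rmult_le_pos; [apply Rdiv_le_0_compat; [apply pow_le |]|]; lra. }
  replace (q ^ n * W / (1 - q)) with (q ^ n / (1 - q) * W) by (field; lra).
  unfold Rdiv in *. nra.
Qed.

Lemma Lim_seq_geometric_increments (u : nat -> R) (q W : R) :
  0 <= q < 1 -> 0 <= W -> (forall n, Rabs (u (S n) - u n) <= q ^ n * W) ->
  forall n, Rabs (real (Lim_seq u) - u n) <= q ^ n * W / (1 - q).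
Proof.
  intros Hq HW Hs.
  pose proof (geometric_increments_bound u q W Hq HW Hs) as Hb.
  assert (Hc : ex_finite_lim_seq u).
  { apply ex_lim_seq_cauchy_corr. intros eps.
    assert (Hq' : Rabs q < 1) by (rewrite Rabs_right; lra).
    assert (Hp : 0 < eps * (1 - q) / (2 * (W + 1))).
    { apply Rdiv_lt_0_compat; [apply Rmult_lt_0_compat; [apply cond_pos |] |]; lra. }
    destruct (pow_lt_1_zero q Hq' _ Hp) as [N HN]. exists N. intros n m Hn Hm.
    specialize (HN N (le_n N)). rewrite Rabs_right in HN by (apply Rle_ge, pow_le; lra).
    replace (u n - u m) with ((u n - u N) - (u m - u N)) by ring.
    eapply Rle_lt_trans; [apply Rabs_triang |]. rewrite Rabs_Ropp.
    assert (q ^ N * W / (1 - q) < eps / 2).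
    { apply Rle_lt_trans with (q ^ N * ((W + 1) / (1 - q))).
      - unfold Rdiv. rewrite <- Rmult_assoc. apply Rmult_le_compat_r.
        + apply Rlt_le, Rinv_0_lt_compat. lra.
        + pose proof (pow_le q N (proj1 Hq)). nra.
      - apply Rmult_lt_compat_r with (r := (W + 1) / (1 - q)) in HN; [| apply Rdiv_lt_0_compat; lra].
        replace (eps * (1 - q) / (2 * (W + 1)) * ((W + 1) / (1 - q))) with (eps / 2) in HN.
        + exact HN.
        + field. lra. }
    pose proof (Hb N n Hn). pose proof (Hb N m Hm). lra. }
  intros n.
  pose proof (Lim_seq_correct' _ Hc) as Hl.
  pose proof (is_lim_seq_abs _ _ (is_lim_seq_minus' _ _ _ _ Hl (is_lim_seq_const (u n)))) as Hl2.
  refine (is_lim_seq_le_loc _ _ _ _ _ Hl2 (is_lim_seq_const (q ^ n * W / (1 - q)))).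
  exists n. intros m Hm. now apply Hb.
Qed.

Lemma continuous_geometric_limit (u : nat -> R -> R) (U : R -> R) (C q r y0 : R) :
  0 <= q < 1 -> 0 < r -> (forall n, continuous (u n) y0) ->
  (forall n z, Rabs (z - y0) < r -> Rabs (U z - u n z) <= C * q ^ n) -> continuous U y0.
Proof.
  intros Hq Hr Hu HU. apply continuous_R_eps_delta. intros eps.
  assert (Hq' : Rabs q < 1) by (rewrite Rabs_right; lra).
  assert (Hp : 0 < eps / (3 * (Rabs C + 1))).
  { apply Rdiv_lt_0_compat; [apply cond_pos | pose proof (Rabs_pos C); lra]. }
  destruct (pow_lt_1_zero q Hq' _ Hp) as [N HN]. specialize (HN N (le_n N)).
  rewrite Rabs_right in HN by (apply Rle_ge, pow_le; lra).
  assert (HCN : C * q ^ N < eps / 3).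
  { pose proof (pow_le q N (proj1 Hq)). pose proof (Rle_abs C). pose proof (Rabs_pos C).
    apply Rmult_lt_compat_l with (r := 3 * (Rabs C + 1)) in HN; [| lra].
    replace (3 * (Rabs C + 1) * (eps / (3 * (Rabs C + 1)))) with (pos eps) in HN by (field; lra).
    nra. }
  destruct (proj1 (continuous_R_eps_delta _ _) (Hu N) (mkposreal _ Hp)) as [d Hd].
  assert (Hdr : 0 < Rmin d r) by (apply Rmin_pos; [apply cond_pos | exact Hr]).
  exists (mkposreal _ Hdr). simpl. intros z Hz.
  assert (Hzd : Rabs (z - y0) < d) by (eapply Rlt_le_trans; [exact Hz | apply Rmin_l]).
  assert (Hzr : Rabs (z - y0) < r) by (eapply Rlt_le_trans; [exact Hz | apply Rmin_r]).
  pose proof (HU N z Hzr) as H1.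
  pose proof (HU N y0 ltac:(rewrite Rminus_diag, Rabs_R0; exact Hr)) as H2.
  pose proof (Hd z Hzd) as H3. simpl in H3.
  assert (eps / (3 * (Rabs C + 1)) <= eps / 3).
  { unfold Rdiv. apply Rmult_le_compat_l; [pose proof (cond_pos eps); lra |].
    apply Rinv_le_contravar; [lra | pose proof (Rabs_pos C); lra]. }
  replace (U z - U y0) with ((U z - u N z) + (u N z - u N y0) - (U y0 - u N y0)) by ring.
  eapply Rle_lt_trans; [apply Rabs_triang |]. rewrite Rabs_Ropp.
  eapply Rle_lt_trans; [apply Rplus_le_compat_r, Rabs_triang |]. lra.
Qed.

(** * Estimates of order [|y|^k] at [0] *)

Lemma bigO0_intro (f : R -> R) k C d : 0 < d ->
  (forall y, Rabs y <= d -> Rabs (f y) <= C * Rabs y ^ k) -> bigO0 f k.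
Proof. intros Hd H. exists C, d. split; [exact Hd |]. intros y Hy. apply H. lra. Qed.

Lemma bigO0_elim (f : R -> R) k : bigO0 f k ->
  exists C d, 0 < d /\ 0 <= C /\ forall y, Rabs y <= d -> Rabs (f y) <= C * Rabs y ^ k.
Proof.
  intros [C [d [Hd H]]]. exists (Rmax C 0), (d / 2). split; [lra |]. split; [apply Rmax_r |].
  intros y Hy. eapply Rle_trans; [apply H; lra |].
  apply Rmult_le_compat_r; [apply pow_le, Rabs_pos | apply Rmax_l].
Qed.

Lemma bigO0_ext (f g : R -> R) k : (forall y, f y = g y) -> bigO0 f k -> bigO0 g k.
Proof. intros E [C [d [Hd H]]]. exists C, d. split; [exact Hd |]. intros y. rewrite <- E. apply H. Qed.

Lemma bigO0_plus (f g : R -> R) k : bigO0 f k -> bigO0 g k -> bigO0 (fun y => f y + g y) k.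
Proof.
  intros Hf Hg. destruct (bigO0_elim f k Hf) as [C1 [d1 [Hd1 [_ H1]]]].
  destruct (bigO0_elim g k Hg) as [C2 [d2 [Hd2 [_ H2]]]].
  apply (bigO0_intro _ k (C1 + C2) (Rmin d1 d2)); [now apply Rmin_pos |].
  intros y Hy. pose proof (Rmin_l d1 d2). pose proof (Rmin_r d1 d2).
  eapply Rle_trans; [apply Rabs_triang |].
  pose proof (H1 y ltac:(lra)). pose proof (H2 y ltac:(lra)). lra.
Qed.

Lemma bigO0_scal (f : R -> R) c k : bigO0 f k -> bigO0 (fun y => c * f y) k.
Proof.
  intros [C [d [Hd H]]]. exists (Rabs c * C), d. split; [exact Hd |]. intros y Hy.
  rewrite Rabs_mult, Rmult_assoc. apply Rmult_le_compat_l; [apply Rabs_pos | now apply H].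
Qed.

Lemma bigO0_minus (f g : R -> R) k : bigO0 f k -> bigO0 g k -> bigO0 (fun y => f y - g y) k.
Proof.
  intros Hf Hg. apply (bigO0_ext (fun y => f y + -1 * g y)); [intros; ring |].
  now apply bigO0_plus, bigO0_scal.
Qed.

Lemma bigO0_mult (f g : R -> R) j k : bigO0 f j -> bigO0 g k -> bigO0 (fun y => f y * g y) (j + k).
Proof.
  intros Hf Hg. destruct (bigO0_elim f j Hf) as [C1 [d1 [Hd1 [HC1 H1]]]].
  destruct (bigO0_elim g k Hg) as [C2 [d2 [Hd2 [HC2 H2]]]].
  apply (bigO0_intro _ _ (C1 * C2) (Rmin d1 d2)); [now apply Rmin_pos |].
  intros y Hy. pose proof (Rmin_l d1 d2). pose proof (Rmin_r d1 d2).
  rewrite Rabs_mult, pow_add.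
  replace (C1 * C2 * (Rabs y ^ j * Rabs y ^ k)) with ((C1 * Rabs y ^ j) * (C2 * Rabs y ^ k)) by ring.
  apply Rmult_le_compat; try apply Rabs_pos; [apply H1 | apply H2]; lra.
Qed.

Lemma bigO0_id : bigO0 (fun y => y) 1.
Proof. apply (bigO0_intro _ 1 1 1); [lra |]. intros y _. lra. Qed.

Lemma bigO0_continuous (f : R -> R) : continuous f 0 -> bigO0 f 0.
Proof.
  intros Hf. destruct (proj1 (continuous_R_eps_delta f 0) Hf (mkposreal 1 Rlt_0_1)) as [d Hd].
  exists (Rabs (f 0) + 1), d. split; [apply cond_pos |]. intros y Hy.
  rewrite pow_O, Rmult_1_r. specialize (Hd y ltac:(rewrite Rminus_0_r; exact Hy)). simpl in Hd.
  pose proof (Rabs_triang_inv (f y) (f 0)). lra.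
Qed.

Lemma bigO0_div (f h : R -> R) k :
  (forall y, y <> 0 -> f y = h y * y) -> h 0 = 0 -> bigO0 f (S k) -> bigO0 h k.
Proof.
  intros E H0 Hf. destruct (bigO0_elim f _ Hf) as [C [d [Hd [HC H]]]].
  apply (bigO0_intro _ k C d Hd). intros y Hy.
  destruct (Req_dec y 0) as [-> | Hy0].
  - rewrite H0, Rabs_R0. apply Rmult_le_pos; [exact HC | apply pow_le; lra].
  - specialize (H y Hy). rewrite E, Rabs_mult in H by exact Hy0.
    apply Rmult_le_reg_r with (Rabs y); [now apply Rabs_pos_lt |].
    replace (C * Rabs y ^ k * Rabs y) with (C * Rabs y ^ S k) by (simpl; ring). exact H.
Qed.

(* The bound [B] improves to [c + q B], whose fixed point is [c / (1 - q)]; the additive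
   slack [E] shrinks geometrically along the way. *)
Lemma bigO0_bootstrap (e : R -> R) (c q d0 E0 : R) (k : nat) :
  0 <= q < 1 -> 0 <= c -> 0 < d0 ->
  (forall y, Rabs y <= d0 -> Rabs (e y) <= E0) ->
  (forall y, Rabs y <= d0 -> forall B E, 0 <= B -> 0 <= E ->
     (forall t, Rabs t <= Rabs y -> Rabs (e t) <= B * Rabs t ^ k + E) ->
     Rabs (e y) <= (c + q * B) * Rabs y ^ k + q * E) ->
  bigO0 e k.
Proof.
  intros Hq Hc Hd0 H0 Hstep.
  assert (HE0 : 0 <= E0) by (specialize (H0 0); rewrite Rabs_R0 in H0; pose proof (Rabs_pos (e 0)); lra).
  assert (HB : 0 <= c / (1 - q)) by (apply Rdiv_le_0_compat; lra).
  assert (Hn : forall n y, Rabs y <= d0 -> Rabs (e y) <= c / (1 - q) * Rabs y ^ k + E0 * q ^ n).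
  { induction n as [|n IH]; intros y Hy.
    - pose proof (pow_le _ k (Rabs_pos y)). specialize (H0 y Hy). simpl. nra.
    - eapply Rle_trans.
      + apply (Hstep y Hy (c / (1 - q)) (E0 * q ^ n)); [lra | | intros t Ht; apply IH; lra].
        apply Rmult_le_pos; [lra | apply pow_le; lra].
      + right. simpl. field. lra. }
  exists (c / (1 - q)), d0. split; [exact Hd0|]. intros y Hy.
  apply (le_of_geometric_slack _ _ E0 q Hq). intros n. apply Hn. lra.
Qed.

Lemma Rabs_between_le (c y : R) : Rmin 0 y <= c <= Rmax 0 y -> Rabs c <= Rabs y.
Proof.
  unfold Rmin, Rmax. destruct Rle_dec; intros H; apply Rabs_le_between;
    [rewrite (Rabs_right y) | rewrite (Rabs_left y)]; lra.
Qed.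

Lemma bigO0_integrate (f df : R -> R) k :
  (forall x, is_derive f x (df x)) -> f 0 = 0 -> bigO0 df k -> bigO0 f (S k).
Proof.
  intros Hd H0 Hdf. destruct (bigO0_elim df k Hdf) as [C [d [Hpos [HC H]]]].
  apply (bigO0_intro _ _ C d Hpos). intros y Hy.
  destruct (MVT_gen f 0 y df) as [c [Hc E]].
  - intros x _. apply Hd.
  - intros x _. apply continuity_pt_filterlim.
    apply (ex_derive_continuous (K := R_AbsRing) (V := R_NormedModule)). eexists. apply Hd.
  - apply Rabs_between_le in Hc. rewrite H0, !Rminus_0_r in E. rewrite E, Rabs_mult, <- tech_pow_Rmult.
    rewrite (Rmult_comm (Rabs y)), <- Rmult_assoc. apply Rmult_le_compat_r; [apply Rabs_pos |].
    eapply Rle_trans; [apply H; lra |].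
    apply Rmult_le_compat_l; [exact HC |]. apply pow_incr. split; [apply Rabs_pos | exact Hc].
Qed.

Lemma is_derive_bigO0 (f : R -> R) l : bigO0 (fun y => f y - f 0 - l * y) 2 -> is_derive f 0 l.
Proof.
  intros Hf. destruct (bigO0_elim _ _ Hf) as [C [d [Hd [HC H]]]].
  apply is_derive_Reals. intros eps Heps.
  assert (Hp : 0 < Rmin d (eps / (C + 1))) by (apply Rmin_pos; [| apply Rdiv_lt_0_compat]; lra).
  exists (mkposreal _ Hp). simpl. intros y Hy0 Hy.
  pose proof (Rmin_l d (eps / (C + 1))). pose proof (Rmin_r d (eps / (C + 1))).
  rewrite Rplus_0_l. replace ((f y - f 0) / y - l) with ((f y - f 0 - l * y) / y) by (field; exact Hy0).
  unfold Rdiv. rewrite Rabs_mult, Rabs_inv.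
  assert (Hy1 : 0 < Rabs y) by now apply Rabs_pos_lt.
  apply Rmult_lt_reg_r with (Rabs y); [exact Hy1 |]. rewrite Rmult_assoc, Rinv_l, Rmult_1_r by lra.
  eapply Rle_lt_trans; [apply H; lra |]. simpl. rewrite Rmult_1_r, <- Rmult_assoc.
  apply Rmult_lt_compat_r; [exact Hy1 |].
  apply Rle_lt_trans with ((C + 1) * Rabs y); [nra |].
  apply Rmult_lt_reg_r with (/ (C + 1)); [apply Rinv_0_lt_compat; lra |].
  replace ((C + 1) * Rabs y * / (C + 1)) with (Rabs y) by (field; lra). exact (Rlt_le_trans _ _ _ Hy H1).
Qed.

Lemma continuous_bigO0 (f : R -> R) : bigO0 (fun y => f y - f 0) 1 -> continuous f 0.
Proof.
  intros Hf. destruct (bigO0_elim _ _ Hf) as [C [d [Hd [HC H]]]].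
  apply continuous_R_eps_delta. intros eps.
  assert (Hp : 0 < Rmin d (eps / (C + 1))) by (apply Rmin_pos; [| apply Rdiv_lt_0_compat; [apply cond_pos |]]; lra).
  exists (mkposreal _ Hp). simpl. intros y Hy. rewrite Rminus_0_r in Hy.
  pose proof (Rmin_l d (eps / (C + 1))). pose proof (Rmin_r d (eps / (C + 1))).
  eapply Rle_lt_trans; [apply H; lra |]. rewrite pow_1.
  apply Rle_lt_trans with ((C + 1) * Rabs y); [pose proof (Rabs_pos y); nra |].
  apply Rmult_lt_reg_r with (/ (C + 1)); [apply Rinv_0_lt_compat; lra |].
  replace ((C + 1) * Rabs y * / (C + 1)) with (Rabs y) by (field; lra).
  replace (eps * / (C + 1)) with (eps / (C + 1)) by reflexivity. lra.
Qed.

Lemma DL_pol_0 (f : R -> R -> R) x y dx dy : DL_pol 0 f x y dx dy = f x y.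
Proof. unfold DL_pol, differential, partial_derive. simpl. unfold Binomial.C. simpl. field. Qed.

Lemma DL_pol_1 (f : R -> R -> R) x y dx dy :
  DL_pol 1 f x y dx dy = f x y + pd_y f x y * dx + pd_z f x y * dy.
Proof. unfold DL_pol, differential, partial_derive, pd_y, pd_z. simpl. unfold Binomial.C. simpl. field. Qed.

Lemma differentiable_pt_lim_DL_regular (f : R -> R -> R) x y :
  DL_regular_n f 1 x y -> differentiable_pt_lim f x y (pd_y f x y) (pd_z f x y).
Proof.
  intros [D [rho HD]] eps.
  set (r := Rmin rho (eps / (Rabs D + 1))).
  assert (Hr : 0 < r) by (apply Rmin_pos; [apply cond_pos | apply Rdiv_lt_0_compat; [apply cond_pos |]];
    pose proof (Rabs_pos D); lra).
  exists (mkposreal _ Hr). simpl. intros u v Hu Hv.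
  assert (r <= rho) by apply Rmin_l. assert (r <= eps / (Rabs D + 1)) by apply Rmin_r.
  specialize (HD u v ltac:(lra) ltac:(lra)). rewrite DL_pol_1 in HD.
  set (mx := Rmax (Rabs (u - x)) (Rabs (v - y))) in *.
  assert (Hmx0 : 0 <= mx) by (eapply Rle_trans; [apply Rabs_pos | apply Rmax_l]).
  assert (Hmx : mx <= eps / (Rabs D + 1)) by (unfold mx, Rmax; destruct Rle_dec; lra).
  replace (f u v - f x y - (pd_y f x y * (u - x) + pd_z f x y * (v - y)))
    with (f u v - (f x y + pd_y f x y * (u - x) + pd_z f x y * (v - y))) by ring.
  eapply Rle_trans; [exact HD |]. simpl. rewrite Rmult_1_r.
  assert (Rabs D * mx <= eps).
  { apply Rmult_le_reg_r with (/ (Rabs D + 1)); [apply Rinv_0_lt_compat; pose proof (Rabs_pos D); lra |].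
    apply Rle_trans with mx; [| exact Hmx].
    rewrite Rmult_assoc, (Rmult_comm mx), <- Rmult_assoc.
    rewrite <- (Rmult_1_l mx) at 2. apply Rmult_le_compat_r; [exact Hmx0 |].
    pose proof (Rabs_pos D). apply Rmult_le_reg_r with (Rabs D + 1); [lra |].
    rewrite Rmult_assoc, Rinv_l; lra. }
  rewrite <- Rmult_assoc. apply Rmult_le_compat_r; [exact Hmx0 |].
  pose proof (Rle_abs D). nra.
Qed.

Lemma bigO0_DL_pol (f : R -> R -> R) n c (z : R -> R) :
  DL_regular_n f n 0 c -> bigO0 (fun y => z y - c) 1 ->
  bigO0 (fun y => f y (z y) - DL_pol n f 0 c y (z y - c)) (S n).
Proof.
  intros [D [rho HD]] Hz. destruct (bigO0_elim _ _ Hz) as [C [d [Hd [HC Hzc]]]].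
  set (r := Rmin d (rho / (2 * (1 + C)))).
  assert (Hr : 0 < r) by (apply Rmin_pos; [exact Hd | apply Rdiv_lt_0_compat; [apply cond_pos | lra]]).
  apply (bigO0_intro _ _ (Rabs D * (1 + C) ^ S n) r Hr). intros y Hy.
  assert (r <= d) by apply Rmin_l. assert (r <= rho / (2 * (1 + C))) by apply Rmin_r.
  pose proof (Rabs_pos y). specialize (Hzc y ltac:(lra)). rewrite pow_1 in Hzc.
  assert (Hyr : (1 + C) * Rabs y < rho).
  { apply Rle_lt_trans with ((1 + C) * (rho / (2 * (1 + C)))); [apply Rmult_le_compat_l; lra |].
    replace ((1 + C) * (rho / (2 * (1 + C)))) with (rho / 2) by (field; lra). pose proof (cond_pos rho). lra. }
  assert (Hmax : Rmax (Rabs (y - 0)) (Rabs (z y - c)) <= (1 + C) * Rabs y).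
  { rewrite Rminus_0_r. apply Rmax_lub; nra. }
  specialize (HD y (z y) ltac:(rewrite Rminus_0_r; nra) ltac:(nra)). rewrite Rminus_0_r in HD, Hmax.
  eapply Rle_trans; [exact HD |]. rewrite Rmult_assoc, <- Rpow_mult_distr.
  assert (Hm0 : 0 <= Rmax (Rabs y) (Rabs (z y - c))) by (eapply Rle_trans; [apply Rabs_pos | apply Rmax_l]).
  eapply Rle_trans; [apply Rmult_le_compat_r; [now apply pow_le | apply Rle_abs] |].
  apply Rmult_le_compat_l; [apply Rabs_pos |]. apply pow_incr. now split.
Qed.

(** * The averaged fixed-point problem *)

Definition averaged_eq_on (phi : R -> R -> R) (Y : R) (v : R -> R) : Prop :=
  forall y, Rabs y <= Y -> v y = average (fun t => phi t (/ v t)) y.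

Definition averaged_solution (phi : R -> R -> R) (v : R -> R) : Prop :=
  (forall t, continuous v t) /\ (forall t, 0 < v t) /\
  forall y, v y = average (fun t => phi t (/ v t)) y.

Section Phi.

Variable phi : R -> R -> R.
Hypothesis Hc2 : C2_2d phi.

Lemma continuity_2d_phi y z : continuity_2d_pt phi y z.
Proof. destruct Hc2 as [_ [_ [_ H]]]. apply H. Qed.

Lemma continuity_2d_pd_y y z : continuity_2d_pt (pd_y phi) y z.
Proof. destruct Hc2 as [_ [_ [_ H]]]. apply H. Qed.

Lemma continuity_2d_pd_z y z : continuity_2d_pt (pd_z phi) y z.
Proof. destruct Hc2 as [_ [_ [_ H]]]. apply H. Qed.

Lemma is_derive_phi_z y z : is_derive (fun t => phi y t) z (pd_z phi y z).
Proof. destruct Hc2 as [H _]. apply Derive_correct, H. Qed.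

Lemma ex_diff_n_phi u v : ex_diff_n phi 2 u v.
Proof.
  destruct Hc2 as [Hp [Hpy [Hpz Hc]]].
  destruct (Hc u v) as [C0 [C1 [C2 [C3 [C4 [C5 C6]]]]]].
  destruct (Hp u v), (Hpy u v), (Hpz u v). simpl. repeat split; auto.
Qed.

Lemma DL_regular_phi x y : DL_regular_n phi 1 x y.
Proof. apply Taylor_Lagrange_2d. exists (mkposreal 1 Rlt_0_1). intros; apply ex_diff_n_phi. Qed.

Lemma DL_regular_pd_y x y : DL_regular_n (pd_y phi) 0 x y.
Proof.
  apply Taylor_Lagrange_2d. exists (mkposreal 1 Rlt_0_1). intros u v _ _.
  exact (ex_diff_n_deriv_aux1 phi 1 u v (ex_diff_n_phi u v)).
Qed.

Lemma DL_regular_pd_z x y : DL_regular_n (pd_z phi) 0 x y.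
Proof.
  apply Taylor_Lagrange_2d. exists (mkposreal 1 Rlt_0_1). intros u v _ _.
  exact (ex_diff_n_deriv_aux2 phi 1 u v (ex_diff_n_phi u v)).
Qed.

Lemma continuous_phi_inv (v : R -> R) t :
  continuous v t -> 0 < v t -> continuous (fun t => phi t (/ v t)) t.
Proof.
  intros Hv Hp. apply (continuous_comp_2d phi (fun t => t)); [apply continuity_2d_phi | apply continuous_id |].
  apply continuous_Rinv_comp; [exact Hv | lra].
Qed.

Lemma phi_lipschitz_z_on y z1 z2 L :
  (forall z, Rmin z1 z2 <= z <= Rmax z1 z2 -> Rabs (pd_z phi y z) <= L) ->
  Rabs (phi y z1 - phi y z2) <= L * Rabs (z1 - z2).
Proof.
  intros Hb. destruct (MVT_gen (fun t => phi y t) z2 z1 (pd_z phi y)) as [c [Hc E]].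
  - intros z _. apply is_derive_phi_z.
  - intros z _. apply continuity_pt_filterlim.
    apply (ex_derive_continuous (K := R_AbsRing) (V := R_NormedModule)). eexists. apply is_derive_phi_z.
  - rewrite E, Rabs_mult. apply Rmult_le_compat_r; [apply Rabs_pos |].
    apply Hb. rewrite Rmin_comm, Rmax_comm. exact Hc.
Qed.

Hypothesis Hinf : forall y z, 0 <= z -> 0 <= pd_z phi y z.
Variable M : R.
Hypothesis HM : forall y z, 0 <= z -> pd_z phi y z <= M.

Lemma M_nonneg : 0 <= M.
Proof. apply Rle_trans with (pd_z phi 0 0); [apply Hinf | apply HM]; lra. Qed.

Lemma phi_lipschitz_z y z1 z2 : 0 <= z1 -> 0 <= z2 -> Rabs (phi y z1 - phi y z2) <= M * Rabs (z1 - z2).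
Proof.
  intros H1 H2. apply phi_lipschitz_z_on. intros z Hz.
  assert (0 <= z) by (eapply Rle_trans; [apply Rmin_glb; [exact H1 | exact H2] | apply Hz]).
  rewrite Rabs_right by (apply Rle_ge, Hinf; lra). now apply HM.
Qed.

Lemma phi_increasing_z y z1 z2 : 0 <= z1 <= z2 -> phi y z1 <= phi y z2 <= phi y z1 + M * (z2 - z1).
Proof.
  intros H. destruct (MVT_gen (fun t => phi y t) z1 z2 (pd_z phi y)) as [c [Hc E]].
  - intros z _. apply is_derive_phi_z.
  - intros z _. apply continuity_pt_filterlim.
    apply (ex_derive_continuous (K := R_AbsRing) (V := R_NormedModule)). eexists. apply is_derive_phi_z.
  - rewrite Rmin_left, Rmax_right in Hc by lra. simpl in E.
    pose proof (Hinf y c ltac:(lra)). pose proof (HM y c ltac:(lra)). split; nra.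
Qed.

Hypothesis Hpos : forall y z, 0 <= z -> 0 < phi y z.

Lemma phi_bounds_on_strip Y : 0 <= Y -> exists m Mx, 0 < m <= 1/2 /\ 2 <= Mx /\
  (forall t z, Rabs t <= Y -> 0 <= z -> m <= phi t z) /\
  (forall t z, Rabs t <= Y -> 0 <= z <= / m -> phi t z <= Mx).
Proof.
  intros HY.
  assert (Hc : forall c, -Y <= c <= Y -> continuity_pt (fun t => phi t 0) c).
  { intros c _. apply continuity_pt_filterlim.
    apply (continuous_comp_2d phi (fun t => t) (fun _ => 0));
      [apply continuity_2d_phi | apply continuous_id | apply continuous_const]. }
  destruct (continuity_ab_min (fun t => phi t 0) (-Y) Y ltac:(lra) Hc) as [tm [Hm1 Hm2]].
  destruct (continuity_ab_maj (fun t => phi t 0) (-Y) Y ltac:(lra) Hc) as [tM [HM1 HM2]].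
  pose proof (Hpos tm 0 (Rle_refl 0)).
  set (m := Rmin (phi tm 0) (1/2)).
  assert (Hm : 0 < m <= 1/2) by (split; [apply Rmin_pos; lra | apply Rmin_r]).
  exists m, (Rmax (phi tM 0 + M / m) 2). split; [exact Hm |]. split; [apply Rmax_r |]. split.
  - intros t z Ht Hz. apply Rabs_le_between in Ht.
    apply Rle_trans with (phi tm 0); [apply Rmin_l |].
    apply Rle_trans with (phi t 0); [apply Hm1; lra | apply phi_increasing_z; lra].
  - intros t z Ht Hz. apply Rabs_le_between in Ht. eapply Rle_trans; [| apply Rmax_l].
    destruct (phi_increasing_z t 0 z ltac:(lra)) as [_ H2].
    assert (phi t 0 <= phi tM 0) by (apply HM1; lra).
    assert (M * (z - 0) <= M / m) by (apply Rmult_le_compat_l; [apply M_nonneg | lra]).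
    lra.
Qed.

Hypothesis Hd01 : pd_z phi 0 1 < 1.

Lemma phi_inv_contraction_near_1 : exists q0 e r, 0 <= q0 < 1 /\ 0 < e <= 1/2 /\ 0 < r /\
  forall t x1 x2, Rabs t < r -> Rabs (x1 - 1) <= e -> Rabs (x2 - 1) <= e ->
    Rabs (phi t (/ x1) - phi t (/ x2)) <= q0 * Rabs (x1 - x2).
Proof.
  set (p0 := pd_z phi 0 1). assert (Hp0 : 0 <= p0 < 1) by (split; [apply Hinf; lra | apply Hd01]).
  set (eta := (1 - p0) / 4).
  destruct (continuity_2d_pd_z 0 1 (mkposreal eta ltac:(unfold eta; lra))) as [r Hr]. simpl in Hr.
  set (e := Rmin ((1 - p0) / 8) (r / 4)).
  assert (He : 0 < e <= (1 - p0) / 8) by (split; [apply Rmin_pos; [lra | pose proof (cond_pos r); lra] | apply Rmin_l]).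
  assert (Her : e <= r / 4) by apply Rmin_r.
  exists ((p0 + eta) / ((1 - e) * (1 - e))), e, r.
  split; [| split; [lra | split; [apply cond_pos |]]].
  { unfold eta. split; [apply Rdiv_le_0_compat; nra |].
    apply Rmult_lt_reg_r with ((1 - e) * (1 - e)); [nra |].
    unfold Rdiv. rewrite Rmult_assoc, Rinv_l by nra. nra. }
  intros t x1 x2 Ht Hx1 Hx2.
  destruct (Rinv_near_1 x1 e ltac:(lra) Hx1) as [Hz1 _].
  destruct (Rinv_near_1 x2 e ltac:(lra) Hx2) as [Hz2 _].
  apply Rabs_le_between in Hz1, Hz2.
  eapply Rle_trans; [apply (phi_lipschitz_z_on t _ _ (p0 + eta)) |].
  - intros z Hz.
    assert (Rmin (/ x1) (/ x2) >= 1 - 2 * e) by (apply Rle_ge, Rmin_glb; lra).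
    assert (Rmax (/ x1) (/ x2) <= 1 + 2 * e) by (apply Rmax_lub; lra).
    specialize (Hr t z ltac:(rewrite Rminus_0_r; exact Ht) ltac:(apply Rabs_lt_between; pose proof (cond_pos r); lra)).
    apply Rabs_lt_between in Hr. apply Rabs_le_between. fold p0 in Hr. unfold eta in *. lra.
  - apply Rabs_le_between in Hx1, Hx2.
    eapply Rle_trans; [apply Rmult_le_compat_l; [unfold eta; lra | apply (Rinv_lipschitz _ _ (1 - e)); lra] |].
    right. field. lra.
Qed.

Hypothesis H01 : phi 0 1 = 1.

Lemma phi_inv_local_contraction : exists q0 e d, 0 <= q0 < 1 /\ 0 < e <= 1/2 /\ 0 < d <= 1 /\
  (forall t x1 x2, Rabs t <= d -> Rabs (x1 - 1) <= e -> Rabs (x2 - 1) <= e ->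
     Rabs (phi t (/ x1) - phi t (/ x2)) <= q0 * Rabs (x1 - x2)) /\
  (forall t x, Rabs t <= d -> Rabs (x - 1) <= e -> Rabs (phi t (/ x) - 1) <= e).
Proof.
  destruct phi_inv_contraction_near_1 as [q0 [e [r [Hq0 [He [Hr Lip]]]]]].
  assert (Hq0e : 0 < (1 - q0) * e) by (apply Rmult_lt_0_compat; lra).
  destruct (continuity_2d_phi 0 1 (mkposreal _ Hq0e)) as [r' Hr']. simpl in Hr'. rewrite H01 in Hr'.
  set (d := Rmin (Rmin r r') 1 / 2).
  assert (Hd : 0 < d <= 1 /\ d < r /\ d < r').
  { pose proof (cond_pos r'). pose proof (Rmin_l (Rmin r r') 1). pose proof (Rmin_r (Rmin r r') 1).
    pose proof (Rmin_l r r'). pose proof (Rmin_r r r').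
    assert (0 < Rmin (Rmin r r') 1) by (repeat apply Rmin_pos; lra). unfold d. lra. }
  exists q0, e, d. split; [exact Hq0 |]. split; [exact He |]. split; [lra |].
  split; [intros t x1 x2 Ht; apply Lip; lra |].
  intros t x Ht Hx.
  pose proof (Lip t x 1 ltac:(lra) Hx ltac:(rewrite Rminus_diag, Rabs_R0; lra)) as A1.
  rewrite Rinv_1 in A1.
  pose proof (Hr' t 1 ltac:(rewrite Rminus_0_r; lra) ltac:(rewrite Rminus_diag, Rabs_R0; apply cond_pos)) as A2.
  replace (phi t (/ x) - 1) with ((phi t (/ x) - phi t 1) + (phi t 1 - 1)) by ring.
  eapply Rle_trans; [apply Rabs_triang |].
  assert (q0 * Rabs (x - 1) <= q0 * e) by (apply Rmult_le_compat_l; lra). lra.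
Qed.

(** * Truncation and Picard iteration *)

Section Truncation.

Variables Y m Mx q0 e d : R.
Hypothesis HY : 1 <= Y.
Hypothesis Hm : 0 < m <= 1/2.
Hypothesis HMx : 2 <= Mx.
Hypothesis Hlow : forall t z, Rabs t <= Y -> 0 <= z -> m <= phi t z.
Hypothesis Hup : forall t z, Rabs t <= Y -> 0 <= z <= / m -> phi t z <= Mx.
Hypothesis Hq0 : 0 <= q0 < 1.
Hypothesis He : 0 < e <= 1/2.
Hypothesis Hd : 0 < d <= 1.
Hypothesis Hlip : forall t x1 x2, Rabs t <= d -> Rabs (x1 - 1) <= e -> Rabs (x2 - 1) <= e ->
  Rabs (phi t (/ x1) - phi t (/ x2)) <= q0 * Rabs (x1 - x2).
Hypothesis Hself : forall t x, Rabs t <= d -> Rabs (x - 1) <= e -> Rabs (phi t (/ x) - 1) <= e.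

(* The equation is modified outside [[-Y, Y] x [m, Mx]] so that its integrand becomes globally
   bounded and Lipschitz; averaged solutions on [[-Y, Y]] never leave that box. *)
Definition trunc_integrand (t x : R) : R := phi (clamp (-Y) Y t) (/ clamp m Mx x).

Definition trunc_op (u : R -> R) : R -> R := average (fun t => trunc_integrand t (u t)).

Fixpoint picard (n : nat) : R -> R :=
  match n with O => fun _ => 1 | S k => trunc_op (picard k) end.

Definition q : R := Rmax q0 (1/2).
Definition lip : R := M / (m * m) + 1.
(* With [b := rate r * |y|], [lip * RInt (fun s => exp (b * s)) 0 1 <= lip * exp b / b], and
   [lip / b = q * r / |y| <= q] once [|y| >= r]: away from [0] the weight [exp (rate r * |t|)]
   absorbs the Lipschitz constant [lip]. *)
Definition rate (r : R) : R := lip / (q * r).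

Lemma q_bounds : 1/2 <= q < 1 /\ q0 <= q.
Proof. unfold q, Rmax. destruct Rle_dec; lra. Qed.

Lemma lip_pos : 1 <= lip.
Proof. unfold lip. pose proof M_nonneg. assert (0 <= M / (m * m)) by (apply Rdiv_le_0_compat; nra). lra. Qed.

Lemma rate_pos r : 0 < r -> 0 < rate r.
Proof. intros Hr. pose proof lip_pos. pose proof q_bounds. apply Rdiv_lt_0_compat; nra. Qed.

Lemma trunc_integrand_bounds t x : m <= trunc_integrand t x <= Mx.
Proof.
  unfold trunc_integrand. pose proof (clamp_bounds m Mx x ltac:(lra)).
  pose proof (clamp_bounds (-Y) Y t ltac:(lra)).
  assert (0 < / clamp m Mx x <= / m) by (split; [apply Rinv_0_lt_compat | apply Rinv_le_contravar]; lra).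
  assert (Rabs (clamp (-Y) Y t) <= Y) by (apply Rabs_le_between; lra).
  split; [apply Hlow | apply Hup]; auto; lra.
Qed.

Lemma trunc_integrand_lipschitz t a b :
  Rabs (trunc_integrand t a - trunc_integrand t b) <= lip * Rabs (a - b).
Proof.
  unfold trunc_integrand.
  pose proof (clamp_bounds m Mx a ltac:(lra)). pose proof (clamp_bounds m Mx b ltac:(lra)).
  eapply Rle_trans; [apply phi_lipschitz_z; apply Rlt_le, Rinv_0_lt_compat; lra |].
  eapply Rle_trans; [apply Rmult_le_compat_l; [apply M_nonneg | apply (Rinv_lipschitz _ _ m); lra] |].
  eapply Rle_trans; [apply Rmult_le_compat_l; [apply M_nonneg |];
    apply Rmult_le_compat_r; [apply Rlt_le, Rinv_0_lt_compat; nra | apply clamp_lipschitz; lra] |].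
  unfold lip. pose proof (Rabs_pos (a - b)). unfold Rdiv. nra.
Qed.

Lemma trunc_integrand_id t x : Rabs t <= Y -> m <= x <= Mx -> trunc_integrand t x = phi t (/ x).
Proof.
  intros Ht Hx. apply Rabs_le_between in Ht. unfold trunc_integrand. now rewrite !clamp_id by lra.
Qed.

Lemma trunc_integrand_id_near t x : Rabs t <= d -> Rabs (x - 1) <= e ->
  trunc_integrand t x = phi t (/ x).
Proof. intros Ht Hx. apply Rabs_le_between in Hx. apply trunc_integrand_id; lra. Qed.

Lemma continuous_trunc_integrand (u : R -> R) t :
  continuous u t -> continuous (fun t => trunc_integrand t (u t)) t.
Proof.
  intros Hu. pose proof (clamp_bounds m Mx (u t) ltac:(lra)).
  apply (continuous_comp_2d phi (clamp (-Y) Y) (fun t => / clamp m Mx (u t))).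
  - apply continuity_2d_phi.
  - apply continuous_clamp. lra.
  - apply continuous_Rinv_comp; [| lra].
    apply (continuous_comp u (clamp m Mx)); [exact Hu | apply continuous_clamp; lra].
Qed.

Lemma continuous_trunc_op (u : R -> R) y :
  (forall t, continuous u t) -> continuous (trunc_op u) y.
Proof. intros Hu. apply continuous_average. intros t. now apply continuous_trunc_integrand. Qed.

Lemma trunc_op_bounds (u : R -> R) y : (forall t, continuous u t) -> m <= trunc_op u y <= Mx.
Proof.
  intros Hu. assert (Hc : forall t, continuous (fun t => trunc_integrand t (u t)) t)
    by (intros; now apply continuous_trunc_integrand).
  split; [apply average_ge | apply average_le]; try exact Hc; intros; apply trunc_integrand_bounds.
Qed.

Lemma trunc_op_minus (u1 u2 : R -> R) y :
  (forall t, continuous u1 t) -> (forall t, continuous u2 t) ->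
  trunc_op u1 y - trunc_op u2 y =
  average (fun t => trunc_integrand t (u1 t) - trunc_integrand t (u2 t)) y.
Proof. intros. symmetry. apply average_minus; intros; now apply continuous_trunc_integrand. Qed.

Lemma trunc_op_near (u : R -> R) : (forall t, continuous u t) ->
  (forall t, Rabs t <= d -> Rabs (u t - 1) <= e) ->
  forall y, Rabs y <= d -> Rabs (trunc_op u y - 1) <= e.
Proof.
  intros Hu Hn y Hy.
  rewrite <- (average_const 1 y). unfold trunc_op.
  rewrite <- average_minus by (intros; apply continuous_const || now apply continuous_trunc_integrand).
  apply abs_average_le.
  { intros t. apply (continuous_minus (fun t => trunc_integrand t (u t)) (fun _ => 1));
      [now apply continuous_trunc_integrand | apply continuous_const]. }
  intros s Hs. pose proof (Rabs_scale_le s y Hs).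
  rewrite trunc_integrand_id_near by (try apply Hn; lra). apply Hself; [lra | apply Hn; lra].
Qed.

Section Contraction.

Variables (r D y : R) (u1 u2 : R -> R).
Hypothesis Hr : 0 < r <= d.
Hypothesis Hu1 : forall t, continuous u1 t.
Hypothesis Hu2 : forall t, continuous u2 t.
Hypothesis HD : 0 <= D.
Hypothesis Hweight : forall t, Rabs t <= Rabs y -> Rabs (u1 t - u2 t) <= D * exp (rate r * Rabs t).

Lemma trunc_op_contraction_near :
  (forall t, Rabs t <= r -> Rabs (u1 t - 1) <= e) -> (forall t, Rabs t <= r -> Rabs (u2 t - 1) <= e) ->
  Rabs y <= r -> Rabs (trunc_op u1 y - trunc_op u2 y) <= q * D * exp (rate r * Rabs y).
Proof.
  intros Hn1 Hn2 Hy. destruct q_bounds as [Hq Hqq0]. pose proof (rate_pos r ltac:(lra)).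
  rewrite trunc_op_minus by assumption. apply abs_average_le.
  { intros t. apply (continuous_minus (fun t => trunc_integrand t (u1 t)) (fun t => trunc_integrand t (u2 t)));
      now apply continuous_trunc_integrand. }
  intros s Hs. pose proof (Rabs_scale_le s y Hs).
  rewrite !trunc_integrand_id_near by (try apply Hn1; try apply Hn2; lra).
  eapply Rle_trans; [apply Hlip; [lra | apply Hn1 | apply Hn2]; lra |].
  assert (exp (rate r * Rabs (s * y)) <= exp (rate r * Rabs y)).
  { apply exp_le_compat. apply Rmult_le_compat_l; lra. }
  apply Rle_trans with (q0 * (D * exp (rate r * Rabs y))).
  { apply Rmult_le_compat_l; [lra |]. eapply Rle_trans; [apply Hweight; lra |].
    apply Rmult_le_compat_l; lra. }
  rewrite Rmult_assoc. apply Rmult_le_compat_r; [pose proof (exp_pos (rate r * Rabs y)); nra | lra].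
Qed.

Lemma trunc_op_contraction_far :
  r < Rabs y -> Rabs (trunc_op u1 y - trunc_op u2 y) <= q * D * exp (rate r * Rabs y).
Proof.
  intros Hy. destruct q_bounds as [Hq _]. pose proof lip_pos.
  set (b := rate r * Rabs y).
  assert (Hb : 0 < b) by (apply Rmult_lt_0_compat; [apply rate_pos |]; lra).
  assert (Hc : forall t, continuous (fun t => trunc_integrand t (u1 t) - trunc_integrand t (u2 t)) t).
  { intros t. apply (continuous_minus (fun t => trunc_integrand t (u1 t)) (fun t => trunc_integrand t (u2 t)));
      now apply continuous_trunc_integrand. }
  rewrite trunc_op_minus by assumption.
  eapply Rle_trans; [apply (abs_average_le_RInt _ Hc (fun s => lip * D * exp (b * s))) |].
  - intros t. apply (continuous_mult (fun _ => lip * D) (fun s => exp (b * s)));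
      [apply continuous_const | apply continuous_exp_scal].
  - intros s Hs. eapply Rle_trans; [apply trunc_integrand_lipschitz |].
    rewrite Rmult_assoc. apply Rmult_le_compat_l; [lra |].
    replace (b * s) with (rate r * Rabs (s * y)) by (unfold b; rewrite Rabs_mult, Rabs_right by lra; ring).
    apply Hweight, Rabs_scale_le, Hs.
  - rewrite RInt_Rmult by (apply ex_RInt_R; intros; apply continuous_exp_scal).
    eapply Rle_trans; [apply Rmult_le_compat_l; [nra | apply (RInt_exp_scal_le b Hb)] |].
    assert (E : lip * D * (exp b / b) = q * D * exp b * (r / Rabs y)).
    { unfold b, rate. field. split; [lra | split; lra]. }
    rewrite E. assert (r / Rabs y <= 1) by (apply Rle_div_l; lra).
    assert (0 <= q * D * exp b) by (pose proof (exp_pos b); apply Rmult_le_pos; nra).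
    assert (0 <= r / Rabs y) by (apply Rdiv_le_0_compat; lra). unfold b in *. nra.
Qed.

End Contraction.

Lemma trunc_op_contraction (r D y : R) (u1 u2 : R -> R) : 0 < r <= d ->
  (forall t, continuous u1 t) -> (forall t, continuous u2 t) ->
  (forall t, Rabs t <= r -> Rabs (u1 t - 1) <= e) -> (forall t, Rabs t <= r -> Rabs (u2 t - 1) <= e) ->
  0 <= D -> (forall t, Rabs t <= Rabs y -> Rabs (u1 t - u2 t) <= D * exp (rate r * Rabs t)) ->
  Rabs (trunc_op u1 y - trunc_op u2 y) <= q * D * exp (rate r * Rabs y).
Proof.
  intros Hr Hu1 Hu2 Hn1 Hn2 HD Hw. destruct (Rle_or_lt (Rabs y) r).
  - now apply trunc_op_contraction_near.
  - now apply trunc_op_contraction_far.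
Qed.

Lemma continuous_picard n t : continuous (picard n) t.
Proof.
  revert t. induction n as [|n IH]; intros t; [apply continuous_const |].
  apply continuous_trunc_op, IH.
Qed.

Lemma picard_near n t : Rabs t <= d -> Rabs (picard n t - 1) <= e.
Proof.
  revert t. induction n as [|n IH]; intros t Ht.
  - simpl. rewrite Rminus_diag, Rabs_R0. lra.
  - apply trunc_op_near; [apply continuous_picard | exact IH | exact Ht].
Qed.

Lemma picard_increment n y :
  Rabs (picard (S n) y - picard n y) <= q ^ n * (Mx * exp (rate d * Rabs y)).
Proof.
  revert y. destruct q_bounds as [Hq _]. induction n as [|n IH]; intros y.
  - pose proof (trunc_op_bounds (fun _ => 1) y (fun t => continuous_const 1 t)).
    assert (1 <= exp (rate d * Rabs y)).
    { rewrite <- exp_0. apply exp_le_compat, Rmult_le_pos; [apply Rlt_le, rate_pos; lra | apply Rabs_pos]. }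
    simpl. apply Rabs_le_between. nra.
  - change (Rabs (trunc_op (picard (S n)) y - trunc_op (picard n) y) <= q ^ S n * (Mx * exp (rate d * Rabs y))).
    apply Rle_trans with (q * (q ^ n * Mx) * exp (rate d * Rabs y)); [| right; simpl; ring].
    apply trunc_op_contraction; try apply continuous_picard; try apply picard_near; try lra.
    + apply Rmult_le_pos; [apply pow_le |]; lra.
    + intros t _. rewrite Rmult_assoc. apply IH.
Qed.

Definition trunc_solution (y : R) : R := real (Lim_seq (fun n => picard n y)).

Lemma trunc_solution_picard n y :
  Rabs (trunc_solution y - picard n y) <= q ^ n * (Mx * exp (rate d * Rabs y)) / (1 - q).
Proof.
  destruct q_bounds as [Hq _]. unfold trunc_solution.
  apply (Lim_seq_geometric_increments (fun n => picard n y)); [lra | | intros; apply picard_increment].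
  apply Rmult_le_pos; [lra | apply Rlt_le, exp_pos].
Qed.

Lemma trunc_solution_near t : Rabs t <= d -> Rabs (trunc_solution t - 1) <= e.
Proof.
  intros Ht. destruct q_bounds as [Hq _].
  apply (le_of_geometric_slack _ e (Mx * exp (rate d * Rabs t) / (1 - q)) q); [lra |]. intros n.
  replace (trunc_solution t - 1) with ((trunc_solution t - picard n t) + (picard n t - 1)) by ring.
  eapply Rle_trans; [apply Rabs_triang |].
  pose proof (trunc_solution_picard n t). pose proof (picard_near n t Ht).
  replace (Mx * exp (rate d * Rabs t) / (1 - q) * q ^ n)
    with (q ^ n * (Mx * exp (rate d * Rabs t)) / (1 - q)) by (field; lra). lra.
Qed.

Lemma continuous_trunc_solution y0 : continuous trunc_solution y0.
Proof.
  destruct q_bounds as [Hq _].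
  apply (continuous_geometric_limit picard _ (Mx * exp (rate d * (Rabs y0 + 1)) / (1 - q)) q 1 y0);
    [lra | lra | intros; apply continuous_picard |].
  intros n z Hz. eapply Rle_trans; [apply trunc_solution_picard |].
  replace (Mx * exp (rate d * (Rabs y0 + 1)) / (1 - q) * q ^ n)
    with (q ^ n * (Mx * exp (rate d * (Rabs y0 + 1))) / (1 - q)) by (field; lra).
  unfold Rdiv. apply Rmult_le_compat_r; [apply Rlt_le, Rinv_0_lt_compat; lra |].
  apply Rmult_le_compat_l; [apply pow_le; lra |]. apply Rmult_le_compat_l; [lra |].
  apply exp_le_compat, Rmult_le_compat_l; [apply Rlt_le, rate_pos; lra |].
  pose proof (Rabs_triang_inv z y0). lra.
Qed.

Lemma trunc_solution_fixed y : trunc_solution y = trunc_op trunc_solution y.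
Proof.
  destruct q_bounds as [Hq _]. set (W := Mx * exp (rate d * Rabs y)).
  assert (HW : 0 <= W) by (apply Rmult_le_pos; [lra | apply Rlt_le, exp_pos]).
  apply (eq_of_geometric_bound _ _ (2 * W / (1 - q)) q); [lra |]. intros n.
  replace (trunc_solution y - trunc_op trunc_solution y)
    with ((trunc_solution y - picard (S n) y) + (trunc_op (picard n) y - trunc_op trunc_solution y))
    by (change (picard (S n) y) with (trunc_op (picard n) y); ring).
  eapply Rle_trans; [apply Rabs_triang |].
  pose proof (trunc_solution_picard (S n) y) as H1. fold W in H1.
  assert (H2 : Rabs (trunc_op (picard n) y - trunc_op trunc_solution y) <= q * (q ^ n * Mx / (1 - q)) * exp (rate d * Rabs y)).
  { apply trunc_op_contraction; try apply continuous_picard; try apply continuous_trunc_solution;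
      try apply picard_near; try apply trunc_solution_near; try lra.
    - apply Rdiv_le_0_compat; [apply Rmult_le_pos; [apply pow_le |] |]; lra.
    - intros t _. rewrite Rabs_minus_sym. eapply Rle_trans; [apply trunc_solution_picard |].
      right. field. lra. }
  replace (q * (q ^ n * Mx / (1 - q)) * exp (rate d * Rabs y)) with (q ^ S n * W / (1 - q)) in H2
    by (unfold W; simpl; field; lra).
  replace (2 * W / (1 - q) * q ^ n) with (q ^ n * (2 * W / (1 - q))) by ring.
  assert (q ^ S n * W / (1 - q) <= q ^ n * (W / (1 - q))).
  { simpl. unfold Rdiv. pose proof (pow_le q n ltac:(lra)).
    assert (0 <= W * / (1 - q)) by (apply Rmult_le_pos; [lra | apply Rlt_le, Rinv_0_lt_compat; lra]).
    rewrite !Rmult_assoc. rewrite <- (Rmult_1_l (q ^ n * _)) at 2.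
    apply Rmult_le_compat_r; [now apply Rmult_le_pos | lra]. }
  unfold Rdiv in *. lra.
Qed.

Lemma trunc_solution_bounds t : m <= trunc_solution t <= Mx.
Proof. rewrite trunc_solution_fixed. apply trunc_op_bounds, continuous_trunc_solution. Qed.

Lemma trunc_solution_averaged_eq : averaged_eq_on phi Y trunc_solution.
Proof.
  intros y Hy. rewrite trunc_solution_fixed at 1. apply average_ext. intros s Hs.
  apply trunc_integrand_id; [eapply Rle_trans; [apply Rabs_scale_le |] |]; auto using trunc_solution_bounds.
Qed.

Lemma averaged_eq_on_trunc_op (v : R -> R) : (forall t, continuous v t) -> (forall t, 0 < v t) ->
  averaged_eq_on phi Y v -> forall y, Rabs y <= Y -> v y = trunc_op v y.
Proof.
  intros Hv Hp Heq.
  assert (Hc : forall t, continuous (fun t => phi t (/ v t)) t) by (intros; now apply continuous_phi_inv).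
  assert (Hlo : forall y, Rabs y <= Y -> m <= v y).
  { intros y Hy. rewrite Heq by exact Hy. apply average_ge; [exact Hc |]. intros s Hs.
    apply Hlow; [eapply Rle_trans; [apply Rabs_scale_le |] |]; auto. apply Rlt_le, Rinv_0_lt_compat, Hp. }
  assert (Hhi : forall y, Rabs y <= Y -> v y <= Mx).
  { intros y Hy. rewrite Heq by exact Hy. apply average_le; [exact Hc |]. intros s Hs.
    assert (Rabs (s * y) <= Y) by (eapply Rle_trans; [apply Rabs_scale_le |]; auto).
    pose proof (Hlo _ H). apply Hup; [exact H |].
    split; [apply Rlt_le, Rinv_0_lt_compat, Hp | apply Rinv_le_contravar; lra]. }
  intros y Hy. rewrite Heq by exact Hy. apply average_ext. intros s Hs.
  assert (Rabs (s * y) <= Y) by (eapply Rle_trans; [apply Rabs_scale_le |]; auto).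
  symmetry. apply trunc_integrand_id; auto.
Qed.

Lemma trunc_op_fixed_point_unique (v : R -> R) : (forall t, continuous v t) -> v 0 = 1 ->
  (forall y, Rabs y <= Y -> v y = trunc_op v y) -> forall y, Rabs y <= Y -> v y = trunc_solution y.
Proof.
  intros Hv Hv0 Hfix. destruct q_bounds as [Hq _].
  destruct (proj1 (continuous_R_eps_delta v 0) (Hv 0) (mkposreal _ (proj1 He))) as [r0 Hr0].
  simpl in Hr0. rewrite Hv0 in Hr0.
  set (r := Rmin d (r0 / 2)).
  assert (r <= d) by apply Rmin_l. assert (r <= r0 / 2) by apply Rmin_r.
  assert (0 < r) by (apply Rmin_pos; pose proof (cond_pos r0); lra).
  assert (Hvn : forall t, Rabs t <= r -> Rabs (v t - 1) <= e) by (intros t Ht; left; apply Hr0; rewrite Rminus_0_r; lra).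
  assert (Hind : forall n y, Rabs y <= Y -> Rabs (v y - trunc_solution y) <= q ^ n * Mx * exp (rate r * Rabs y)).
  { induction n as [|n IH]; intros y Hy.
    - assert (1 <= exp (rate r * Rabs y)).
      { rewrite <- exp_0. apply exp_le_compat, Rmult_le_pos; [apply Rlt_le, rate_pos | apply Rabs_pos]; lra. }
      rewrite Hfix by exact Hy. pose proof (trunc_op_bounds v y Hv). pose proof (trunc_solution_bounds y).
      simpl. apply Rabs_le_between. nra.
    - rewrite Hfix, trunc_solution_fixed by exact Hy.
      replace (q ^ S n * Mx) with (q * (q ^ n * Mx)) by (simpl; ring).
      apply trunc_op_contraction; auto using continuous_trunc_solution; try lra.
      + intros t Ht. apply trunc_solution_near. lra.
      + apply Rmult_le_pos; [apply pow_le |]; lra.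
      + intros t Ht. apply IH. lra. }
  intros y Hy. apply (eq_of_geometric_bound _ _ (Mx * exp (rate r * Rabs y)) q); [lra |].
  intros n. rewrite Rmult_comm, <- Rmult_assoc. now apply Hind.
Qed.

End Truncation.

Hypothesis Huniq : forall a, 0 < a -> a = phi 0 (/ phi 0 (/ a)) -> a = 1.

Lemma phi_fixed_point_at_0 a : 0 < a -> a = phi 0 (/ a) -> a = 1.
Proof. intros Ha E. apply Huniq; [exact Ha |]. now rewrite <- E. Qed.

Definition unique_averaged_solution_on (Y : R) (U : R -> R) : Prop :=
  (forall t, continuous U t) /\ (forall t, 0 < U t) /\ averaged_eq_on phi Y U /\
  forall v, (forall t, continuous v t) -> (forall t, 0 < v t) -> averaged_eq_on phi Y v ->
    forall y, Rabs y <= Y -> v y = U y.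

Lemma unique_averaged_solution_on_exists Y : 1 <= Y -> exists U, unique_averaged_solution_on Y U.
Proof.
  intros HY. destruct (phi_bounds_on_strip Y ltac:(lra)) as [m [Mx [Hm [HMx [Hlo Hhi]]]]].
  destruct phi_inv_local_contraction as [q0 [e [d [Hq0 [He [Hd [Hlip Hself]]]]]]].
  assert (Hb : forall t, m <= trunc_solution Y m Mx t <= Mx) by (intros; eapply trunc_solution_bounds; eauto).
  exists (trunc_solution Y m Mx).
  split; [intros; eapply continuous_trunc_solution; eauto |].
  split; [intros t; specialize (Hb t); lra |].
  split; [eapply trunc_solution_averaged_eq; eauto |].
  intros v Hv Hp Heq. eapply trunc_op_fixed_point_unique; eauto.
  - apply phi_fixed_point_at_0; [apply Hp |]. rewrite Heq at 1 by (rewrite Rabs_R0; lra). apply average_0.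
  - eapply averaged_eq_on_trunc_op; eauto.
Qed.

Lemma unique_averaged_solutions_agree Y1 Y2 U1 U2 : 1 <= Y1 <= Y2 ->
  unique_averaged_solution_on Y1 U1 -> unique_averaged_solution_on Y2 U2 ->
  forall y, Rabs y <= Y1 -> U1 y = U2 y.
Proof.
  intros HY [_ [_ [_ Hu1]]] [Hc2' [Hp2 [He2 _]]] y Hy.
  symmetry. apply Hu1; auto. intros z Hz. apply He2. lra.
Qed.

Lemma averaged_solution_exists_unique :
  exists G, averaged_solution phi G /\ forall v, averaged_solution phi v -> forall y, v y = G y.
Proof.
  destruct (choice (fun Y U => 1 <= Y -> unique_averaged_solution_on Y U)) as [U HU].
  { intros Y. destruct (Rle_dec 1 Y) as [HY | HY].
    - destruct (unique_averaged_solution_on_exists Y HY) as [U HU]. now exists U.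
    - exists (fun _ => 0). intros; lra. }
  set (G := fun y => U (Rabs y + 1) y).
  assert (HG : forall Y y, 1 <= Y -> Rabs y <= Y -> G y = U Y y).
  { intros Y y HY Hy. unfold G. pose proof (Rabs_pos y).
    destruct (Rle_dec Y (Rabs y + 1)).
    - symmetry. apply (unique_averaged_solutions_agree Y (Rabs y + 1)); try apply HU; lra.
    - apply (unique_averaged_solutions_agree (Rabs y + 1) Y); try apply HU; lra. }
  exists G. split; [split; [| split] |].
  - intros y. pose proof (Rabs_pos y). destruct (HU (Rabs y + 1) ltac:(lra)) as [Hc _].
    apply continuous_ext_loc with (g := U (Rabs y + 1)); [| apply Hc].
    exists (mkposreal 1 Rlt_0_1). intros z Hz. change (Rabs (z - y) < 1) in Hz.
    symmetry. apply HG; [lra |]. pose proof (Rabs_triang_inv z y). lra.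
  - intros t. pose proof (Rabs_pos t). apply (HU (Rabs t + 1)). lra.
  - intros y. pose proof (Rabs_pos y). destruct (HU (Rabs y + 1) ltac:(lra)) as [_ [_ [He _]]].
    rewrite (HG (Rabs y + 1)), He by lra. apply average_ext. intros s Hs.
    pose proof (Rabs_scale_le s y Hs). now rewrite (HG (Rabs y + 1)) by lra.
  - intros v [Hvc [Hvp Hve]] y. pose proof (Rabs_pos y).
    rewrite (HG (Rabs y + 1)) by lra. apply (HU (Rabs y + 1)); auto; [lra | | lra].
    intros z _. apply Hve.
Qed.

(** * Regularity *)

Section Regularity.

Variable G : R -> R.
Hypothesis HG : averaged_solution phi G.

Definition sol (y : R) : R := y * G y.
Definition dsol (t : R) : R := phi t (/ G t).

Definition py0 : R := pd_y phi 0 1.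
Definition pz0 : R := pd_z phi 0 1.
(* [G'(0)]: differentiating [G = average dsol] at [0] gives [G'(0) = (py0 - pz0 G'(0)) / 2]. *)
Definition slope0 : R := py0 / (2 + pz0).

Lemma continuous_G t : continuous G t.
Proof. apply HG. Qed.

Lemma G_pos t : 0 < G t.
Proof. apply HG. Qed.

Lemma continuous_dsol t : continuous dsol t.
Proof. apply continuous_phi_inv; [apply continuous_G | apply G_pos]. Qed.

Lemma G_average y : G y = average dsol y.
Proof. apply HG. Qed.

Lemma G_0 : G 0 = 1.
Proof. apply phi_fixed_point_at_0; [apply G_pos |]. now rewrite G_average at 1; rewrite average_0. Qed.

Lemma is_derive_sol y : is_derive sol y (dsol y).
Proof.
  apply is_derive_ext with (f := fun z => RInt dsol 0 z).
  - intros t. unfold sol. rewrite G_average, mult_average; [reflexivity | apply continuous_dsol].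
  - apply is_derive_RInt with (a := 0); [| apply continuous_dsol].
    apply filter_forall. intros z. apply (RInt_correct (V := R_CompleteNormedModule)), ex_RInt_R, continuous_dsol.
Qed.

Lemma G_sub_1_average y : G y - 1 = average (fun t => dsol t - 1) y.
Proof.
  rewrite average_minus, average_const, G_average; [reflexivity | apply continuous_dsol |].
  intros; apply continuous_const.
Qed.

Lemma pz0_bounds : 0 <= pz0 < 1.
Proof. split; [apply Hinf; lra | apply Hd01]. Qed.

Lemma G_near_1 e : 0 < e -> exists r, 0 < r /\ forall t, Rabs t <= r -> Rabs (G t - 1) <= e.
Proof.
  intros He. destruct (proj1 (continuous_R_eps_delta G 0) (continuous_G 0) (mkposreal e He)) as [r Hr].
  exists (r / 2). split; [pose proof (cond_pos r); lra |]. intros t Ht.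
  rewrite <- G_0. left. apply Hr. rewrite Rminus_0_r. pose proof (cond_pos r). lra.
Qed.

Lemma phi_1_bigO : bigO0 (fun t => phi t 1 - 1) 1.
Proof.
  apply (bigO0_ext (fun t => phi t 1 - DL_pol 0 phi 0 1 t (1 - 1))).
  { intros t. now rewrite DL_pol_0, H01. }
  apply (bigO0_DL_pol phi 0 1 (fun _ => 1)); [apply Taylor_Lagrange_2d |].
  - exists (mkposreal 1 Rlt_0_1). intros. apply (ex_diff_n_m 2); [lia | apply ex_diff_n_phi].
  - apply (bigO0_intro _ 1 0 1); [lra |]. intros y _. rewrite Rminus_diag, Rabs_R0. lra.
Qed.

Lemma G_sub_1_bigO : bigO0 (fun y => G y - 1) 1.
Proof.
  destruct phi_inv_local_contraction as [q0 [e [d [Hq0 [He [Hd [Hlip _]]]]]]].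
  destruct (bigO0_elim _ _ phi_1_bigO) as [c [dc [Hdc [Hc Hphi]]]].
  destruct (G_near_1 e (proj1 He)) as [dG [HdG HGn]].
  set (d0 := Rmin d (Rmin dc dG)).
  assert (d0 <= d) by apply Rmin_l.
  assert (d0 <= dc) by (eapply Rle_trans; [apply Rmin_r | apply Rmin_l]).
  assert (d0 <= dG) by (eapply Rle_trans; [apply Rmin_r | apply Rmin_r]).
  assert (0 < d0) by (repeat apply Rmin_pos; lra).
  apply (bigO0_bootstrap _ c q0 d0 e 1 Hq0 Hc); [lra | intros; apply HGn; lra |].
  intros y Hy B E HB HE Hbnd. rewrite G_sub_1_average. apply abs_average_le.
  { intros t. apply (continuous_minus dsol (fun _ => 1)); [apply continuous_dsol | apply continuous_const]. }
  intros s Hs. set (t := s * y). assert (Hty : Rabs t <= Rabs y) by now apply Rabs_scale_le.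
  unfold dsol. replace (phi t (/ G t) - 1) with ((phi t (/ G t) - phi t (/ 1)) + (phi t 1 - 1)) by (rewrite Rinv_1; ring).
  eapply Rle_trans; [apply Rabs_triang |].
  assert (A1 : Rabs (phi t (/ G t) - phi t (/ 1)) <= q0 * Rabs (G t - 1)).
  { apply Hlip; [lra | apply HGn; lra | rewrite Rminus_diag, Rabs_R0; lra]. }
  pose proof (Hphi t ltac:(lra)) as A2. pose proof (Hbnd t Hty) as A3. rewrite pow_1 in *.
  assert (q0 * Rabs (G t - 1) <= q0 * (B * Rabs t + E)) by (apply Rmult_le_compat_l; lra).
  assert (c * Rabs t <= c * Rabs y) by (apply Rmult_le_compat_l; lra).
  assert (q0 * B * Rabs t <= q0 * B * Rabs y) by (apply Rmult_le_compat_l; [apply Rmult_le_pos |]; lra).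
  nra.
Qed.

Lemma inv_G_bigO : bigO0 (fun y => / G y) 0.
Proof. apply bigO0_continuous, continuous_Rinv_comp; [apply continuous_G | pose proof (G_pos 0); lra]. Qed.

Lemma inv_G_sub_1_bigO : bigO0 (fun y => / G y - 1) 1.
Proof.
  apply (bigO0_ext (fun y => / G y * (-1 * (G y - 1)))).
  { intros y. pose proof (G_pos y). field. lra. }
  apply (bigO0_mult _ _ 0 1); [apply inv_G_bigO | apply bigO0_scal, G_sub_1_bigO].
Qed.

Definition G_rem2 (y : R) : R := G y - 1 - slope0 * y.

Lemma dsol_expansion : bigO0 (fun t => dsol t - 1 - 2 * slope0 * t + pz0 * G_rem2 t) 2.
Proof.
  pose proof pz0_bounds.
  apply (bigO0_ext (fun t => (phi t (/ G t) - DL_pol 1 phi 0 1 t (/ G t - 1))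
                             + pz0 * (/ G t * ((G t - 1) * (G t - 1))))).
  { intros t. rewrite DL_pol_1, H01. unfold dsol, G_rem2, slope0. fold py0 pz0.
    pose proof (G_pos t). field. lra. }
  apply bigO0_plus.
  - apply bigO0_DL_pol; [apply DL_regular_phi | apply inv_G_sub_1_bigO].
  - apply bigO0_scal, (bigO0_mult _ _ 0 2); [apply inv_G_bigO |].
    apply (bigO0_mult _ _ 1 1); apply G_sub_1_bigO.
Qed.

Lemma G_rem2_average y : G_rem2 y = average (fun t => dsol t - 1 - 2 * slope0 * t) y.
Proof.
  unfold G_rem2. rewrite G_sub_1_average.
  rewrite (average_minus (fun t => dsol t - 1)), average_linear; [field | |].
  - intros t. apply (continuous_minus dsol (fun _ => 1)); [apply continuous_dsol | apply continuous_const].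
  - intros t. apply (continuous_mult (fun _ => 2 * slope0) (fun s => s)); [apply continuous_const | apply continuous_id].
Qed.

Lemma G_rem2_bigO : bigO0 G_rem2 2.
Proof.
  pose proof pz0_bounds.
  destruct (bigO0_elim _ _ dsol_expansion) as [C2 [d2 [Hd2 [HC2 H2]]]].
  assert (Hw1 : bigO0 G_rem2 1) by (apply bigO0_minus; [apply G_sub_1_bigO | apply bigO0_scal, bigO0_id]).
  destruct (bigO0_elim _ _ Hw1) as [C1 [d1 [Hd1 [HC1 H1]]]].
  set (d0 := Rmin d1 d2). assert (d0 <= d1) by apply Rmin_l. assert (d0 <= d2) by apply Rmin_r.
  assert (0 < d0) by (apply Rmin_pos; lra).
  apply (bigO0_bootstrap _ C2 pz0 d0 (C1 * d0) 2); [lra | lra | lra | |].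
  { intros y Hy. eapply Rle_trans; [apply H1; lra |]. rewrite pow_1. apply Rmult_le_compat_l; lra. }
  intros y Hy B E HB HE Hbnd. rewrite G_rem2_average. apply abs_average_le.
  { intros t. apply (continuous_minus (fun t => dsol t - 1) (fun t => 2 * slope0 * t)).
    - apply (continuous_minus dsol (fun _ => 1)); [apply continuous_dsol | apply continuous_const].
    - apply (continuous_mult (fun _ => 2 * slope0) (fun s => s)); [apply continuous_const | apply continuous_id]. }
  intros s Hs. set (t := s * y). assert (Hty : Rabs t <= Rabs y) by now apply Rabs_scale_le.
  replace (dsol t - 1 - 2 * slope0 * t) with ((dsol t - 1 - 2 * slope0 * t + pz0 * G_rem2 t) - pz0 * G_rem2 t) by ring.
  eapply Rle_trans; [apply Rabs_triang |]. rewrite Rabs_Ropp, Rabs_mult, (Rabs_right pz0) by lra.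
  pose proof (H2 t ltac:(lra)). pose proof (Hbnd t Hty).
  assert (Rabs t ^ 2 <= Rabs y ^ 2) by (apply pow_incr; split; [apply Rabs_pos | exact Hty]).
  assert (pz0 * Rabs (G_rem2 t) <= pz0 * (B * Rabs t ^ 2 + E)) by (apply Rmult_le_compat_l; lra).
  assert (C2 * Rabs t ^ 2 <= C2 * Rabs y ^ 2) by (apply Rmult_le_compat_l; lra).
  assert (pz0 * B * Rabs t ^ 2 <= pz0 * B * Rabs y ^ 2) by (apply Rmult_le_compat_l; [apply Rmult_le_pos |]; lra).
  nra.
Qed.

Definition dG (y : R) : R := if Req_EM_T y 0 then slope0 else (dsol y - G y) / y.

Lemma dG_0 : dG 0 = slope0.
Proof. unfold dG. destruct (Req_EM_T 0 0); [reflexivity | lra]. Qed.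

Lemma dG_sub_slope0_bigO : bigO0 (fun y => dG y - slope0) 1.
Proof.
  apply (bigO0_div (fun y => (dsol y - 1 - 2 * slope0 * y + pz0 * G_rem2 y) - (1 + pz0) * G_rem2 y));
    [| now rewrite dG_0, Rminus_diag |].
  - intros y Hy. unfold dG. destruct (Req_EM_T y 0); [contradiction |]. unfold G_rem2. field. exact Hy.
  - apply bigO0_minus; [apply dsol_expansion | apply bigO0_scal, G_rem2_bigO].
Qed.

Lemma is_derive_G y : is_derive G y (dG y).
Proof.
  destruct (Req_EM_T y 0) as [-> | Hy].
  - rewrite dG_0. apply is_derive_bigO0. rewrite G_0. exact G_rem2_bigO.
  - apply is_derive_ext_loc with (f := fun z => sol z / z).
    + apply (filter_imp (fun z => z <> 0)); [| now apply locally_neq].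
      intros z Hz. change (sol z / z = G z :> R). unfold sol. now field.
    + unfold dG. destruct (Req_EM_T y 0); [contradiction |].
      replace ((dsol y - G y) / y) with ((dsol y * y - sol y * 1) / y ^ 2) by (unfold sol; field; exact Hy).
      apply (is_derive_div sol (fun z => z)); [apply is_derive_sol | apply (is_derive_id y) | exact Hy].
Qed.

Lemma continuous_dG y : continuous dG y.
Proof.
  destruct (Req_EM_T y 0) as [-> | Hy].
  - apply continuous_bigO0. rewrite dG_0. exact dG_sub_slope0_bigO.
  - apply continuous_ext_loc with (g := fun z => (dsol z - G z) * / z).
    + apply (filter_imp (fun z => z <> 0)); [| now apply locally_neq].
      intros z Hz. unfold dG. now destruct (Req_EM_T z 0).
    + apply (continuous_mult (fun z => dsol z - G z) (fun z => / z)).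
      * apply (continuous_minus dsol G); [apply continuous_dsol | apply continuous_G].
      * apply continuous_Rinv_comp; [apply continuous_id | exact Hy].
Qed.

Definition dinv_G (y : R) : R := - dG y / G y ^ 2.

Definition d2sol (y : R) : R := pd_y phi y (/ G y) + pd_z phi y (/ G y) * dinv_G y.

Lemma is_derive_dsol y : is_derive dsol y (d2sol y).
Proof.
  apply is_derive_Reals. unfold d2sol. rewrite <- (Rmult_1_r (pd_y phi y (/ G y))).
  apply (derivable_pt_lim_comp_2d phi (fun t => t) (fun t => / G t)).
  - apply differentiable_pt_lim_DL_regular, DL_regular_phi.
  - apply derivable_pt_lim_id.
  - apply is_derive_Reals. unfold dinv_G. apply is_derive_inv; [apply is_derive_G | pose proof (G_pos y); lra].
Qed.

Lemma continuous_dinv_G y : continuous dinv_G y.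
Proof.
  pose proof (G_pos y).
  apply (continuous_mult (fun y => - dG y) (fun y => / G y ^ 2)).
  - apply (continuous_opp dG), continuous_dG.
  - apply continuous_Rinv_comp; [| simpl; nra].
    apply (continuous_mult G (fun y => G y ^ 1)); [apply continuous_G |].
    apply (continuous_mult G (fun _ => 1)); [apply continuous_G | apply continuous_const].
Qed.

Lemma continuous_d2sol y : continuous d2sol y.
Proof.
  assert (Hz : continuous (fun t => / G t) y) by (apply continuous_Rinv_comp; [apply continuous_G | pose proof (G_pos y); lra]).
  apply (continuous_plus (fun y => pd_y phi y (/ G y)) (fun y => pd_z phi y (/ G y) * dinv_G y)).
  - apply (continuous_comp_2d (pd_y phi) (fun t => t)); [apply continuity_2d_pd_y | apply continuous_id | exact Hz].
  - apply (continuous_mult (fun y => pd_z phi y (/ G y)) dinv_G); [| apply continuous_dinv_G].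
    apply (continuous_comp_2d (pd_z phi) (fun t => t)); [apply continuity_2d_pd_z | apply continuous_id | exact Hz].
Qed.

Lemma dinv_G_sub_bigO : bigO0 (fun y => dinv_G y - dinv_G 0) 1.
Proof.
  assert (Hc : bigO0 (fun _ => 1) 0) by apply bigO0_continuous, continuous_const.
  apply (bigO0_ext (fun y => -1 * ((/ G y * / G y) * (dG y - slope0))
                             + - slope0 * ((/ G y + 1) * (/ G y - 1)))).
  { intros y. unfold dinv_G. rewrite dG_0, G_0. pose proof (G_pos y). field. lra. }
  apply bigO0_plus; apply bigO0_scal; apply (bigO0_mult _ _ 0 1).
  - apply (bigO0_mult _ _ 0 0); apply inv_G_bigO.
  - apply dG_sub_slope0_bigO.
  - apply bigO0_plus; [apply inv_G_bigO | exact Hc].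
  - apply inv_G_sub_1_bigO.
Qed.

Lemma d2sol_sub_bigO : bigO0 (fun y => d2sol y - d2sol 0) 1.
Proof.
  apply (bigO0_ext (fun y => (pd_y phi y (/ G y) - DL_pol 0 (pd_y phi) 0 1 y (/ G y - 1))
                             + ((pd_z phi y (/ G y) - DL_pol 0 (pd_z phi) 0 1 y (/ G y - 1)) * dinv_G y
                                + pz0 * (dinv_G y - dinv_G 0)))).
  { intros y. rewrite !DL_pol_0. unfold d2sol, pz0. rewrite G_0, Rinv_1. ring. }
  apply bigO0_plus; [| apply bigO0_plus].
  - apply bigO0_DL_pol; [apply DL_regular_pd_y | apply inv_G_sub_1_bigO].
  - apply (bigO0_mult _ _ 1 0).
    + apply bigO0_DL_pol; [apply DL_regular_pd_z | apply inv_G_sub_1_bigO].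
    + apply bigO0_continuous, continuous_dinv_G.
  - apply bigO0_scal, dinv_G_sub_bigO.
Qed.

Lemma dsol_expansion2 : bigO0 (fun y => dsol y - (dsol 0 + d2sol 0 * y)) 2.
Proof.
  apply (bigO0_integrate _ (fun y => d2sol y - d2sol 0)); [| rewrite Rmult_0_r; ring | apply d2sol_sub_bigO].
  intros x. apply (is_derive_minus dsol (fun y => dsol 0 + d2sol 0 * y)); [apply is_derive_dsol |].
  auto_derive; [easy | ring].
Qed.

Lemma sol_expansion : bigO0 (fun y => sol y - (dsol 0 * y + d2sol 0 * y ^ 2 / 2)) 3.
Proof.
  apply (bigO0_integrate _ (fun y => dsol y - (dsol 0 + d2sol 0 * y))); [| unfold sol; simpl; field | apply dsol_expansion2].
  intros x. apply (is_derive_minus sol (fun y => dsol 0 * y + d2sol 0 * y ^ 2 / 2)); [apply is_derive_sol |].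
  auto_derive; [easy | field].
Qed.

Lemma Derive_sol : Derive sol = dsol.
Proof. apply functional_extensionality. intros y. apply is_derive_unique, is_derive_sol. Qed.

Lemma Derive_n_sol_2 : Derive_n sol 2 = d2sol.
Proof.
  apply functional_extensionality. intros y. simpl.
  rewrite (Derive_ext _ dsol) by (intros t; apply is_derive_unique, is_derive_sol).
  apply is_derive_unique, is_derive_dsol.
Qed.

Lemma dsol_0 : dsol 0 = 1.
Proof. unfold dsol. now rewrite G_0, Rinv_1. Qed.

Lemma sol_is_solution : is_solution phi sol.
Proof.
  unfold is_solution. rewrite Derive_sol. split; [intros y; eexists; apply is_derive_sol |].
  split; [unfold sol; ring |].
  split; [| rewrite dsol_0; split; [lra | now rewrite Rinv_1, H01]].
  intros y Hy. pose proof (G_pos y).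
  assert (E : y / sol y = / G y) by (unfold sol; field; lra).
  split; [unfold sol; apply Rmult_integral_contrapositive; lra |].
  rewrite E. split; [apply Rlt_le, Rinv_0_lt_compat; lra | reflexivity].
Qed.

Lemma C2_1d_sol : C2_1d sol.
Proof.
  intros y. rewrite Derive_n_sol_2, Derive_sol.
  split; [eexists; apply is_derive_sol |]. split; [eexists; apply is_derive_dsol | apply continuous_d2sol].
Qed.

Lemma sol_slope_pos y : y <> 0 -> 0 < sol y / y.
Proof. intros Hy. unfold sol. replace (y * G y / y) with (G y) by (field; exact Hy). apply G_pos. Qed.

End Regularity.

(** * Every solution is [y G(y)] for an averaged solution [G] *)

Section Uniqueness.

Variable h : R -> R.
Hypothesis Hh : is_solution phi h.

Lemma solution_slope_pos y : y <> 0 -> 0 < h y / y.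
Proof.
  intros Hy. destruct Hh as [_ [_ [Hnz _]]]. destruct (Hnz y Hy) as [Hhy [[Hq | Hq] _]].
  - replace (h y / y) with (/ (y / h y)) by (field; auto). now apply Rinv_0_lt_compat.
  - exfalso. symmetry in Hq. apply Rmult_integral in Hq. destruct Hq as [Hq | Hq]; [easy |].
    revert Hq. now apply Rinv_neq_0_compat.
Qed.

Lemma continuous_solution_slope t : continuous (slope_at_0 h) t.
Proof. destruct Hh as [Hex [H0 _]]. now apply continuous_slope_at_0. Qed.

Lemma solution_Derive_0 : Derive h 0 = 1.
Proof.
  assert (Hnn : 0 <= slope_at_0 h 0).
  { apply continuous_0_nonneg; [apply continuous_solution_slope |].
    intros y Hy. rewrite slope_at_0_neq by exact Hy. now apply solution_slope_pos. }
  rewrite slope_at_0_0 in Hnn.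
  destruct Hh as [_ [_ [_ [Hd0 Hfix]]]]. apply phi_fixed_point_at_0; [| exact Hfix].
  destruct Hnn as [| E]; [assumption | now symmetry in E].
Qed.

Lemma Derive_solution t : Derive h t = phi t (/ slope_at_0 h t).
Proof.
  destruct (Req_EM_T t 0) as [-> | Ht].
  - now rewrite slope_at_0_0, solution_Derive_0, Rinv_1, H01.
  - destruct Hh as [_ [_ [Hnz _]]]. destruct (Hnz t Ht) as [Hht [_ ->]].
    rewrite slope_at_0_neq by exact Ht. f_equal. field. auto.
Qed.

Lemma solution_RInt y : h y = RInt (fun t => phi t (/ slope_at_0 h t)) 0 y.
Proof.
  destruct Hh as [Hex [H0 _]].
  assert (Hc : forall t, continuous (fun t => phi t (/ slope_at_0 h t)) t).
  { intros t. apply continuous_phi_inv; [apply continuous_solution_slope |].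
    destruct (Req_EM_T t 0) as [-> | Ht].
    - rewrite slope_at_0_0, solution_Derive_0. lra.
    - rewrite slope_at_0_neq by exact Ht. now apply solution_slope_pos. }
  rewrite <- (RInt_ext (Derive h)) by (intros; apply Derive_solution).
  rewrite RInt_Derive; [rewrite H0; ring | intros; apply Hex |].
  intros t _. apply continuous_ext_loc with (g := fun t => phi t (/ slope_at_0 h t)); [| apply Hc].
  apply filter_forall. intros x. symmetry. apply Derive_solution.
Qed.

Lemma solution_slope_averaged : averaged_solution phi (slope_at_0 h).
Proof.
  assert (Hp : forall t, 0 < slope_at_0 h t).
  { intros t. destruct (Req_EM_T t 0) as [-> | Ht].
    - rewrite slope_at_0_0, solution_Derive_0. lra.
    - rewrite slope_at_0_neq by exact Ht. now apply solution_slope_pos. }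
  split; [apply continuous_solution_slope |]. split; [exact Hp |]. intros y.
  destruct (Req_EM_T y 0) as [-> | Hy].
  - now rewrite average_0, slope_at_0_0, solution_Derive_0, Rinv_1, H01.
  - apply Rmult_eq_reg_l with y; [| exact Hy].
    rewrite mult_average by (intros; apply continuous_phi_inv; [apply continuous_solution_slope | apply Hp]).
    rewrite <- solution_RInt, slope_at_0_neq by exact Hy. field. exact Hy.
Qed.

Lemma solution_eq_slope y : h y = y * slope_at_0 h y.
Proof.
  destruct (Req_EM_T y 0) as [-> | Hy].
  - destruct Hh as [_ [H0 _]]. rewrite H0. ring.
  - rewrite slope_at_0_neq by exact Hy. field. exact Hy.
Qed.

End Uniqueness.
End Phi.

Theorem lemmaA3 (phi : R -> R -> R)
  (Hc2 : C2_2d phi)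
  (Hpos : forall y z, 0 <= z -> 0 < phi y z)
  (Hinf : forall y z, 0 <= z -> 0 <= pd_z phi y z)
  (Hsup : exists M, forall y z, 0 <= z -> pd_z phi y z <= M)
  (Hd01 : pd_z phi 0 1 < 1)
  (H01 : phi 0 1 = 1)
  (Huniq : forall a, 0 < a -> a = phi 0 (/ phi 0 (/ a)) -> a = 1) :
  exists g : R -> R,
    is_solution phi g /\
    (forall h, is_solution phi h -> forall y, h y = g y) /\
    C2_1d g /\
    bigO0 (fun y => g y - (Derive g 0 * y + Derive_n g 2 0 * y ^ 2 / 2)) 3 /\
    bigO0 (fun y => Derive g y - (Derive g 0 + Derive_n g 2 0 * y)) 2 /\
    bigO0 (fun y => Derive_n g 2 y - Derive_n g 2 0) 1 /\
    (forall y, y <> 0 -> 0 < g y / y).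
Proof.
  destruct Hsup as [M HM].
  destruct (averaged_solution_exists_unique phi Hc2 Hinf M HM Hpos Hd01 H01 Huniq) as [G [HG HGu]].
  exists (sol G).
  split; [eapply sol_is_solution; eauto |].
  split.
  { intros h Hh y. rewrite (solution_eq_slope phi h Hh y). unfold sol. f_equal.
    apply HGu. eapply solution_slope_averaged; eauto. }
  erewrite Derive_n_sol_2, Derive_sol by eauto.
  split; [eapply C2_1d_sol; eauto |].
  split; [eapply sol_expansion; eauto |].
  split; [eapply dsol_expansion2; eauto |].
  split; [eapply d2sol_sub_bigO; eauto |].
  now apply (sol_slope_pos phi).
Qed.
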